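(* Assume Hypotheses 1, 2 and 3 (see context). For any fixed $\mathbf{z}\in\mathbb{R}^m$, the map $\Gamma\to\mathbb{R}^n$, $x\mapsto H(x)\mathbf{z}$, is continuous.
   Context: System $\dot x=F(x)$ with $F=(f,g)$, i.e. $\dot a=f(a,z)$, $\dot z=g(a,z)$, $(a,z)\in\mathbb{R}^n\times\mathbb{R}^m$, $X=\mathbb{R}^n\times\mathbb{R}^m$, flow $\Phi(t,x)$. Euclidean inner product, norm, operator norm. $\mathcal{L}(x_1,x_2)=\|a_2-a_1\|^2-\|z_2-z_1\|^2$, $\mathcal{C}(x)=\{x'\in X:\mathcal{L}(x',x)\ge0\}$, $\mathbf{0}$ the zero vector of $X$; $\Pi(a,z)=a$, $\Pi_\perp(a,z)=z$; $\mathbb{B}_d(x)=\{(a',z'):\|a'-a\|\le d,\|z'-z\|\le d\}$. $\Gamma\subseteq U$ positively invariant means $\Phi(t,x)$ is defined for all $t\ge0$ for $x\in\Gamma$ and $\Phi(t,\Gamma)\subseteq\Gamma$. Hypothesis 1: $U$ open and convex, and there is $d>0$ with $\mathcal{C}(x)\cap U\subset\mathbb{B}_d(x)$ for all $x\in U$. Hypothesis 2: $f,g$ are $C^1$ on $U$; there exist continuous $\alpha>0$, $\ell\ge0$ on $U$ and $c_1>0$ with, for all $x\in U$: $\langle a',D_af(x)a'\rangle\ge\alpha(x)\|a'\|^2$; $\langle z',D_zg(x)z'\rangle\le\ell(x)\|z'\|^2$; $\alpha(x)\ge\ell(x)+\|D_zf(x)\|+\|D_ag(x)\|+c_1$. Hypothesis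 3: $\Gamma\subset U$ is positively invariant and $\Pi_\perp(\Gamma)=\Pi_\perp(U)$. For $x\in\Gamma$, $Q(t,x)$ ($t\ge0$) denotes the fundamental matrix solution of $\dot{\mathbf{x}}=DF(\Phi(t,x))\mathbf{x}$ with $Q(0,x)=I$, and $T(x):=\{\mathbf{x}\in X: \mathcal{L}(Q(t,x)\mathbf{x},\mathbf{0})\le0\text{ for all }t\ge0\}$. Under these hypotheses each $T(x)$ is a linear subspace meeting each slice $\{(\mathbf{a},\mathbf{z}):\mathbf{a}\in\mathbb{R}^n\}$ in exactly one point, so there is a unique linear map $H(x):\mathbb{R}^m\to\mathbb{R}^n$ with $T(x)=\{(H(x)\mathbf{z},\mathbf{z}):\mathbf{z}\in\mathbb{R}^m\}$. *)

From Stdlib Require Import Reals ClassicalEpsilon.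
From mathcomp Require Import ssreflect ssrfun ssrbool eqtype ssrnat seq fintype bigop.
Set Implicit Arguments. Unset Strict Implicit.

Local Open Scope R_scope.

Definition vec (n : nat) := 'I_n -> R.
Definition mat (m n : nat) := 'I_m -> 'I_n -> R.

Definition rsum (n : nat) (F : 'I_n -> R) : R := \big[Rplus/R0]_(i < n) F i.

Definition vdot n (u v : vec n) : R := rsum (fun i => u i * v i).
Definition vnorm n (u : vec n) : R := sqrt (vdot u u).
Definition vadd n (u v : vec n) : vec n := fun i => u i + v i.
Definition vsub n (u v : vec n) : vec n := fun i => u i - v i.
Definition vscal n (c : R) (u : vec n) : vec n := fun i => c * u i.
Definition vzero n : vec n := fun _ => 0.
Definition mapp m n (A : mat m n) (v : vec n) : vec m :=
  fun i => rsum (fun j => A i j * v j).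

Definition opnorm m n (A : mat m n) : R :=
  epsilon (inhabits 0)
    (is_lub (fun s => exists v : vec n, vnorm v <= 1 /\ s = vnorm (mapp A v))).

(* The phase space X = R^n x R^m, points x = (a, z) *)
Definition X (n m : nat) := (vec n * vec m)%type.
Definition xadd n m (x y : X n m) : X n m := (vadd x.1 y.1, vadd x.2 y.2).
Definition xsub n m (x y : X n m) : X n m := (vsub x.1 y.1, vsub x.2 y.2).
Definition xscal n m (c : R) (x : X n m) : X n m := (vscal c x.1, vscal c x.2).
Definition xnorm n m (x : X n m) : R := sqrt (vdot x.1 x.1 + vdot x.2 x.2).

Definition Lcone n m (x1 x2 : X n m) : R :=
  vnorm (vsub x2.1 x1.1) ^ 2 - vnorm (vsub x2.2 x1.2) ^ 2.
Definition xzero n m : X n m := (@vzero n, @vzero m).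

Definition ball_d n m (d : R) (x x' : X n m) : Prop :=
  vnorm (vsub x'.1 x.1) <= d /\ vnorm (vsub x'.2 x.2) <= d.

Definition is_open n m (U : X n m -> Prop) : Prop :=
  forall x, U x -> exists r, 0 < r /\ forall y, xnorm (xsub y x) < r -> U y.

Definition is_convex n m (U : X n m -> Prop) : Prop :=
  forall x y lam, U x -> U y -> 0 <= lam <= 1 ->
    U (xadd (xscal lam x) (xscal (1 - lam) y)).

Definition cont_on n m (S : X n m -> Prop) (h : X n m -> R) : Prop :=
  forall x, S x -> forall eps, 0 < eps -> exists delta, 0 < delta /\
    forall y, S y -> xnorm (xsub y x) < delta -> Rabs (h y - h x) < eps.

Definition cont_on_vec n m k (S : X n m -> Prop) (h : X n m -> vec k) : Prop :=
  forall x, S x -> forall eps, 0 < eps -> exists delta, 0 < delta /\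
    forall y, S y -> xnorm (xsub y x) < delta -> vnorm (vsub (h y) (h x)) < eps.

Definition frechet_at n m k (h : X n m -> vec k) (dh : X n m -> vec k) (x : X n m) : Prop :=
  forall eps, 0 < eps -> exists delta, 0 < delta /\
    forall y, xnorm (xsub y x) < delta ->
      vnorm (vsub (vsub (h y) (h x)) (dh (xsub y x))) <= eps * xnorm (xsub y x).

Definition solves_nonneg n m (y : R -> X n m) (V : R -> X n m -> X n m) : Prop :=
  (forall t, 0 < t ->
     (forall i : 'I_n, derivable_pt_lim (fun s => (y s).1 i) t ((V t (y t)).1 i)) /\
     (forall j : 'I_m, derivable_pt_lim (fun s => (y s).2 j) t ((V t (y t)).2 j))) /\
  (forall eps, 0 < eps -> exists delta, 0 < delta /\
     forall t, 0 <= t < delta -> xnorm (xsub (y t) (y 0)) < eps).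

Definition DFapp n m (Daf : X n m -> mat n n) (Dzf : X n m -> mat n m)
  (Dag : X n m -> mat m n) (Dzg : X n m -> mat m m) (p : X n m) (v : X n m) : X n m :=
  (vadd (mapp (Daf p) v.1) (mapp (Dzf p) v.2),
   vadd (mapp (Dag p) v.1) (mapp (Dzg p) v.2)).

From HB Require Import structures.
From Stdlib Require Import Reals Lra ClassicalEpsilon FunctionalExtensionality Classical.
From mathcomp Require Import ssreflect ssrfun ssrbool eqtype ssrnat seq fintype bigop.

(* Fix z, x in Gamma, and put v_y := (H(y) z, z), so L(Q(t,y) v_y) <= 0 for t >= 0.
   1. Cone inequality (Hypothesis 2): along the trajectory of x every variational
      solution u has d/dt L(u) >= beta L(u) + c1 |u|^2 with beta = alpha + ell;
      so with W = exp (- int beta), W L(u) grows at rate >= c1 W |u|^2.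
   2. Escape: if |H(y) z - H(x) z| >= eps, then W L >= eps^2 along
      Q(.,x)(v_y - v_x), hence W L(Q(.,x) v_y) grows linearly and
      L(Q(T,x) v_y) >= 1/W(T) for a time T depending only on x, z, eps.
   3. Continuous dependence (Gronwall in a tube around the trajectory of x):
      Q(T,y) v -> Q(T,x) v as y -> x, uniformly for bounded v.
   As the cone keeps a margin, 2. and 3. contradict L(Q(T,y) v_y) <= 0.
   The file first develops Euclidean geometry of R^n, matrices and X, then
   one-variable calculus (real induction, Gronwall, integrating factors), the
   tube lemma and a mean value inequality, and finally, under the flow
   hypotheses, steps 3, 1, 2 and the continuity of H. *)

Local Open Scope R_scope.
Set Implicit Arguments. Unset Strict Implicit.

Lemma Rplus_assoc_law : associative Rplus.
Proof. by move=> a b c; ring. Qed.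
HB.instance Definition Rplus_comlaw :=
  Monoid.isComLaw.Build R 0 Rplus Rplus_assoc_law Rplus_comm Rplus_0_l.

Lemma rsum_ext n (F G : 'I_n -> R) : (forall i, F i = G i) -> rsum F = rsum G.
Proof. by move=> FG; apply: eq_bigr => i _. Qed.

Lemma rsum_add n (F G : 'I_n -> R) : rsum (fun i => F i + G i) = rsum F + rsum G.
Proof. exact: big_split. Qed.

Lemma rsum_scal n c (F : 'I_n -> R) : rsum (fun i => c * F i) = c * rsum F.
Proof.
apply: (big_rec2 (fun a b => a = c * b)); first by ring.
by move=> i y1 y2 _ ->; ring.
Qed.

Lemma rsum_le n (F G : 'I_n -> R) : (forall i, F i <= G i) -> rsum F <= rsum G.
Proof.
move=> FG; apply: (big_rec2 (fun a b => a <= b)); first lra.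
by move=> i y1 y2 _ le12; have := FG i; lra.
Qed.

Lemma rsum_zero n : rsum (fun _ : 'I_n => 0) = 0.
Proof. exact: big1. Qed.

Lemma rsum_nonneg n (F : 'I_n -> R) : (forall i, 0 <= F i) -> 0 <= rsum F.
Proof. by move=> F0; rewrite -(rsum_zero n); exact: rsum_le. Qed.

Lemma rsum_const n (c : R) : rsum (fun _ : 'I_n => c) = INR n * c.
Proof.
rewrite /rsum big_const_ord; elim: n => [|n IH]; first by rewrite /=; ring.
by rewrite iterS IH S_INR; ring.
Qed.

Lemma rsum_le_const n (F : 'I_n -> R) c : (forall i, F i <= c) -> rsum F <= INR n * c.
Proof. by move=> Fc; rewrite -rsum_const; exact: rsum_le. Qed.

Lemma rsum_abs n (F : 'I_n -> R) : Rabs (rsum F) <= rsum (fun i => Rabs (F i)).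
Proof.
apply: (big_rec2 (fun a b => Rabs a <= b)); first by rewrite Rabs_R0; lra.
by move=> i y1 y2 _ le12; have := Rabs_triang (F i) y1; lra.
Qed.

Lemma rsum_term n (F : 'I_n -> R) i : (forall j, 0 <= F j) -> F i <= rsum F.
Proof.
move=> F0; rewrite /rsum (bigD1 i) //= -{1}(Rplus_0_r (F i)).
apply: Rplus_le_compat_l.
by apply: (big_ind (fun a => 0 <= a)) => //; [lra | move=> a b; lra].
Qed.

Lemma rsum_sq_le n (F : 'I_n -> R) :
  rsum (fun i => F i * F i) <= rsum (fun i => Rabs (F i)) * rsum (fun i => Rabs (F i)).
Proof.
suff [] : rsum (fun i => F i * F i) <= rsum (fun i => Rabs (F i)) * rsum (fun i => Rabs (F i))
          /\ 0 <= rsum (fun i => Rabs (F i)) by [].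
apply: (big_rec2 (fun a b => a <= b * b /\ 0 <= b)); first by split; lra.
move=> i y1 y2 _ [le12 pos2]; have absF := Rabs_pos (F i).
have sqF : F i * F i = Rabs (F i) * Rabs (F i).
  by rewrite -Rabs_mult Rabs_right //; apply: Rle_ge; apply: Rle_0_sqr.
by rewrite sqF; split; nra.
Qed.

Lemma abs_le_of_sq a b : 0 <= b -> a * a <= b * b -> Rabs a <= b.
Proof. by move=> b0 sq; rewrite -(Rabs_right b); [apply: Rsqr_le_abs_0 | lra]. Qed.

Section Vectors.
Variable n : nat.
Implicit Types u v w : vec n.

Lemma vext u v : (forall i, u i = v i) -> u = v.
Proof. exact: functional_extensionality. Qed.

Lemma vdot_comm u v : vdot u v = vdot v u.
Proof. by apply: rsum_ext => i; ring. Qed.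

Lemma vdot_addl u v w : vdot (vadd u v) w = vdot u w + vdot v w.
Proof. by rewrite /vdot -rsum_add; apply: rsum_ext => i; rewrite /vadd; ring. Qed.

Lemma vdot_addr u v w : vdot w (vadd u v) = vdot w u + vdot w v.
Proof. by rewrite vdot_comm vdot_addl !(vdot_comm w). Qed.

Lemma vdot_scall c u v : vdot (vscal c u) v = c * vdot u v.
Proof. by rewrite /vdot -rsum_scal; apply: rsum_ext => i; rewrite /vscal; ring. Qed.

Lemma vdot_scalr c u v : vdot u (vscal c v) = c * vdot u v.
Proof. by rewrite vdot_comm vdot_scall vdot_comm. Qed.

Lemma vsub_eq u v : vsub u v = vadd u (vscal (-1) v).
Proof. by apply: vext => i; rewrite /vsub /vadd /vscal; ring. Qed.

Lemma vdot_subl u v w : vdot (vsub u v) w = vdot u w - vdot v w.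
Proof. by rewrite vsub_eq vdot_addl vdot_scall; ring. Qed.

Lemma vdot_subr u v w : vdot w (vsub u v) = vdot w u - vdot w v.
Proof. by rewrite vdot_comm vdot_subl !(vdot_comm w). Qed.

Lemma vdot_self_nonneg u : 0 <= vdot u u.
Proof. by apply: rsum_nonneg => i; apply: Rle_0_sqr. Qed.

Lemma vnorm_nonneg u : 0 <= vnorm u.
Proof. exact: sqrt_pos. Qed.

Lemma vnorm_sq u : vnorm u * vnorm u = vdot u u.
Proof. by rewrite /vnorm sqrt_sqrt //; exact: vdot_self_nonneg. Qed.

Lemma vnorm_pow2 u : vnorm u ^ 2 = vdot u u.
Proof. by rewrite -vnorm_sq; ring. Qed.

Lemma vnorm_le_of_sq u c : 0 <= c -> vdot u u <= c * c -> vnorm u <= c.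
Proof. by move=> c0; rewrite -vnorm_sq; have := vnorm_nonneg u; nra. Qed.

Lemma vnorm_coord u i : Rabs (u i) <= vnorm u.
Proof.
have := rsum_term (F := fun j => u j * u j) i (fun j => Rle_0_sqr (u j)).
rewrite -/(vdot u u) -vnorm_sq => le_ui.
by apply: abs_le_of_sq; [exact: vnorm_nonneg | nra].
Qed.

Lemma vdot_zero_coord u : vdot u u = 0 -> forall i, u i = 0.
Proof.
move=> u0 i; have := vnorm_coord u i.
rewrite -vnorm_sq in u0; have := vnorm_nonneg u.
have := Rle_abs (u i); have := Rle_abs (- u i); rewrite Rabs_Ropp; nra.
Qed.

Lemma vnorm_le_sumabs u : vnorm u <= rsum (fun i => Rabs (u i)).
Proof.
have := rsum_sq_le u; rewrite -/(vdot u u) -vnorm_sq.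
by have := vnorm_nonneg u; have := rsum_nonneg (fun i => Rabs_pos (u i)); nra.
Qed.

(* Cauchy-Schwarz, from the nonnegativity of |u - l v|^2 at the optimal l. *)
Lemma cauchy_schwarz u v : Rabs (vdot u v) <= vnorm u * vnorm v.
Proof.
have key : vdot u v * vdot u v <= vdot u u * vdot v v.
  have [v0 | v0] := Req_dec (vdot v v) 0.
    have -> : vdot u v = 0.
      by rewrite /vdot -(rsum_zero n); apply: rsum_ext => i; rewrite (vdot_zero_coord v0); ring.
    by rewrite v0; lra.
  have vpos : 0 < vdot v v by have := vdot_self_nonneg v; lra.
  set l := vdot u v / vdot v v.
  have := vdot_self_nonneg (vsub u (vscal l v)).
  rewrite vdot_subl !vdot_subr !vdot_scall !vdot_scalr (vdot_comm v u).
  have lvv : l * vdot v v = vdot u v by rewrite /l; field; lra.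
  by nra.
apply: abs_le_of_sq; first by apply: Rmult_le_pos; exact: vnorm_nonneg.
rewrite (_ : vnorm u * vnorm v * (vnorm u * vnorm v)
             = (vnorm u * vnorm u) * (vnorm v * vnorm v)); last ring.
by rewrite !vnorm_sq.
Qed.

Lemma vdot_le u v : vdot u v <= vnorm u * vnorm v.
Proof. by have := cauchy_schwarz u v; have := Rle_abs (vdot u v); lra. Qed.

Lemma vnorm_add u v : vnorm (vadd u v) <= vnorm u + vnorm v.
Proof.
apply: vnorm_le_of_sq; first by have := vnorm_nonneg u; have := vnorm_nonneg v; lra.
rewrite vdot_addl !vdot_addr -!vnorm_sq (vdot_comm v u).
by have := vdot_le u v; nra.
Qed.

Lemma vnorm_scal c u : vnorm (vscal c u) = Rabs c * vnorm u.
Proof.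
rewrite /vnorm vdot_scall vdot_scalr -Rmult_assoc sqrt_mult.
- by rewrite sqrt_Rsqr_abs.
- exact: Rle_0_sqr.
- exact: vdot_self_nonneg.
Qed.

Lemma vnorm_opp u : vnorm (vscal (-1) u) = vnorm u.
Proof. by rewrite vnorm_scal Rabs_Ropp Rabs_R1; ring. Qed.

Lemma vnorm_zero : vnorm (@vzero n) = 0.
Proof.
rewrite /vnorm /vdot (rsum_ext (G := fun _ => 0)) ?rsum_zero ?sqrt_0 //.
by move=> i; rewrite /vzero; ring.
Qed.

Lemma vnorm_opp0 u : vnorm (vsub (@vzero n) u) = vnorm u.
Proof.
rewrite -vnorm_opp; congr vnorm.
by apply: vext => i; rewrite /vsub /vscal /vzero; ring.
Qed.

(* |u|^2 - |v|^2 = (u - v).(u + v). *)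
Lemma sq_diff u v : Rabs (vdot u u - vdot v v) <= vnorm (vsub u v) * (vnorm u + vnorm v).
Proof.
have -> : vdot u u - vdot v v = vdot (vsub u v) (vadd u v).
  by rewrite vdot_subl !vdot_addr (vdot_comm v u); ring.
apply: Rle_trans (cauchy_schwarz _ _) _.
by apply: Rmult_le_compat_l; [exact: vnorm_nonneg | exact: vnorm_add].
Qed.
End Vectors.

Section Matrices.
Variables p q : nat.
Implicit Types A B : mat p q.

(* The l^1 norm of the entries: a crude but explicit bound on |A v| / |v|,
   convenient because it is controlled entrywise. *)
Definition msum A := rsum (fun i => rsum (fun j => Rabs (A i j))).

Lemma msum_nonneg A : 0 <= msum A.
Proof. by apply: rsum_nonneg => i; apply: rsum_nonneg => j; exact: Rabs_pos. Qed.

Lemma mapp_bound A v : vnorm (mapp A v) <= msum A * vnorm v.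
Proof.
apply: Rle_trans (vnorm_le_sumabs _) _.
rewrite /msum -(Rmult_comm (vnorm v)) -rsum_scal; apply: rsum_le => i.
apply: Rle_trans (rsum_abs _) _.
rewrite -rsum_scal; apply: rsum_le => j; rewrite Rabs_mult.
by have := vnorm_coord v j; have := Rabs_pos (A i j); nra.
Qed.

Lemma mapp_add A u v : mapp A (vadd u v) = vadd (mapp A u) (mapp A v).
Proof. by apply: vext => i; rewrite /mapp /vadd -rsum_add; apply: rsum_ext => j; ring. Qed.

Lemma mapp_scal A c u : mapp A (vscal c u) = vscal c (mapp A u).
Proof. by apply: vext => i; rewrite /mapp /vscal -rsum_scal; apply: rsum_ext => j; ring. Qed.

Lemma mapp_sub A u v : mapp A (vsub u v) = vsub (mapp A u) (mapp A v).
Proof. by rewrite !vsub_eq mapp_add mapp_scal. Qed.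

Lemma mapp_zero A : mapp A (@vzero q) = @vzero p.
Proof.
apply: vext => i; rewrite /mapp /vzero (rsum_ext (G := fun _ => 0)) ?rsum_zero //.
by move=> j; ring.
Qed.

Lemma mapp_msub A B v : vsub (mapp A v) (mapp B v) = mapp (fun i j => A i j - B i j) v.
Proof.
rewrite vsub_eq; apply: vext => i; rewrite /mapp /vadd /vscal -rsum_scal -rsum_add.
by apply: rsum_ext => j; ring.
Qed.

(* The supremum defining the operator norm exists (the set is bounded by
   [msum A]), so [opnorm A] is its least upper bound. *)
Lemma opnorm_spec A :
  is_lub (fun s => exists v : vec q, vnorm v <= 1 /\ s = vnorm (mapp A v)) (opnorm A).
Proof.
rewrite /opnorm; apply: epsilon_spec.
set E := fun s => exists v : vec q, vnorm v <= 1 /\ s = vnorm (mapp A v).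
have E_bounded : bound E.
  exists (msum A) => s [v [v1 ->]]; apply: Rle_trans (mapp_bound A v) _.
  by have := msum_nonneg A; have := vnorm_nonneg v; nra.
have E_inhabited : exists s, E s.
  by exists (vnorm (mapp A (@vzero q))), (@vzero q); rewrite vnorm_zero; split => //; lra.
by have [l lub] := @completeness E E_bounded E_inhabited; exists l.
Qed.

Lemma opnorm_nonneg A : 0 <= opnorm A.
Proof.
case: (opnorm_spec A) => ub _; apply: ub; exists (@vzero q).
by rewrite mapp_zero !vnorm_zero; split; lra.
Qed.

(* The defining property of the operator norm, |A v| <= |A| |v|, obtained
   by normalising v. *)
Lemma opnorm_bound A v : vnorm (mapp A v) <= opnorm A * vnorm v.
Proof.
have [v0 | v0] := Req_dec (vnorm v) 0.
  have -> : v = @vzero q.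
    by apply: vext; apply: vdot_zero_coord; rewrite -vnorm_sq v0; ring.
  by rewrite mapp_zero !vnorm_zero; lra.
have vpos : 0 < vnorm v by have := vnorm_nonneg v; lra.
have ivpos : 0 < / vnorm v by apply: Rinv_0_lt_compat.
case: (opnorm_spec A) => ub _.
have : / vnorm v * vnorm (mapp A v) <= opnorm A.
  apply: ub; exists (vscal (/ vnorm v) v).
  rewrite mapp_scal !vnorm_scal Rabs_right; last lra.
  by split => //; rewrite Rinv_l; lra.
move=> le1; have := Rmult_le_compat_l (vnorm v) _ _ (Rlt_le _ _ vpos) le1.
by rewrite -Rmult_assoc Rinv_r; lra.
Qed.
End Matrices.

Section PhaseSpace.
Variables n m : nat.
Implicit Types x y z u w : X n m.

Lemma xext x y : (forall i, x.1 i = y.1 i) -> (forall j, x.2 j = y.2 j) -> x = y.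
Proof.
by move=> e1 e2; rewrite [x]surjective_pairing [y]surjective_pairing (vext e1) (vext e2).
Qed.

Definition xsq x := vdot x.1 x.1 + vdot x.2 x.2.
Definition xdot x y := vdot x.1 y.1 + vdot x.2 y.2.

Lemma xsq_nonneg x : 0 <= xsq x.
Proof. by have := vdot_self_nonneg x.1; have := vdot_self_nonneg x.2; rewrite /xsq; lra. Qed.

Lemma xnorm_nonneg x : 0 <= xnorm x.
Proof. exact: sqrt_pos. Qed.

Lemma xnorm_sq x : xnorm x * xnorm x = xsq x.
Proof. by rewrite /xnorm sqrt_sqrt //; exact: xsq_nonneg. Qed.

Lemma xnorm_sq_split x :
  xnorm x * xnorm x = vnorm x.1 * vnorm x.1 + vnorm x.2 * vnorm x.2.
Proof. by rewrite xnorm_sq !vnorm_sq. Qed.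

Lemma xnorm_fst x : vnorm x.1 <= xnorm x.
Proof.
have := xnorm_sq_split x; have := xnorm_nonneg x.
by have := vnorm_nonneg x.1; have := vnorm_nonneg x.2; nra.
Qed.

Lemma xnorm_snd x : vnorm x.2 <= xnorm x.
Proof.
have := xnorm_sq_split x; have := xnorm_nonneg x.
by have := vnorm_nonneg x.1; have := vnorm_nonneg x.2; nra.
Qed.

Lemma xnorm_le x : xnorm x <= vnorm x.1 + vnorm x.2.
Proof.
have := xnorm_sq_split x; have := xnorm_nonneg x.
by have := vnorm_nonneg x.1; have := vnorm_nonneg x.2; nra.
Qed.

Lemma xnorm_le_of_sq x c : 0 <= c -> xsq x <= c * c -> xnorm x <= c.
Proof. by move=> c0; rewrite -xnorm_sq; have := xnorm_nonneg x; nra. Qed.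

(* Cauchy-Schwarz in X: the componentwise inequalities, combined by
   Cauchy-Schwarz in R^2. *)
Lemma xdot_le x y : xdot x y <= xnorm x * xnorm y.
Proof.
rewrite /xdot; have := vdot_le x.1 y.1; have := vdot_le x.2 y.2.
set a1 := vnorm x.1; set a2 := vnorm x.2; set b1 := vnorm y.1; set b2 := vnorm y.2.
have sqx := xnorm_sq_split x; have sqy := xnorm_sq_split y.
have := xnorm_nonneg x; have := xnorm_nonneg y.
have := vnorm_nonneg x.1; have := vnorm_nonneg x.2.
have := vnorm_nonneg y.1; have := vnorm_nonneg y.2.
rewrite -/a1 -/a2 -/b1 -/b2 in sqx sqy * => *.
suff : a1 * b1 + a2 * b2 <= xnorm x * xnorm y by lra.
apply: Rsqr_incr_0_var; rewrite /Rsqr; last nra.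
have -> : xnorm x * xnorm y * (xnorm x * xnorm y)
          = (xnorm x * xnorm x) * (xnorm y * xnorm y) by ring.
by rewrite sqx sqy; have := Rle_0_sqr (a1 * b2 - a2 * b1); rewrite /Rsqr; nra.
Qed.

Lemma xnorm_add x y : xnorm (xadd x y) <= xnorm x + xnorm y.
Proof.
apply: xnorm_le_of_sq; first by have := xnorm_nonneg x; have := xnorm_nonneg y; lra.
have := xdot_le x y; have := xnorm_sq x; have := xnorm_sq y; rewrite /xdot /xsq.
by rewrite /xadd /= !vdot_addl !vdot_addr (vdot_comm y.1) (vdot_comm y.2); nra.
Qed.

Lemma xsub_add x y : xsub x y = xadd x (xscal (-1) y).
Proof. by rewrite /xsub /xadd /xscal /= !vsub_eq. Qed.

Lemma xnorm_scal c x : xnorm (xscal c x) = Rabs c * xnorm x.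
Proof.
rewrite /xnorm /xscal /= !vdot_scall !vdot_scalr.
rewrite (_ : c * (c * vdot x.1 x.1) + c * (c * vdot x.2 x.2)
             = (c * c) * (vdot x.1 x.1 + vdot x.2 x.2)); last ring.
by rewrite sqrt_mult ?sqrt_Rsqr_abs //; [exact: Rle_0_sqr | exact: xsq_nonneg].
Qed.

Lemma xnorm_sub x y : xnorm (xsub x y) <= xnorm x + xnorm y.
Proof.
rewrite xsub_add; apply: Rle_trans (xnorm_add _ _) _.
by rewrite xnorm_scal Rabs_Ropp Rabs_R1; lra.
Qed.

Lemma xnorm_tri x y z : xnorm (xsub x z) <= xnorm (xsub x y) + xnorm (xsub y z).
Proof.
have -> : xsub x z = xadd (xsub x y) (xsub y z).
  by apply: xext => i; rewrite /= /vsub /vadd; ring.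
exact: xnorm_add.
Qed.

Lemma xsub_zero x : xsub x (@xzero n m) = x.
Proof. by apply: xext => i; rewrite /= /vsub /vzero; ring. Qed.

Lemma xsub_self x : xsub x x = @xzero n m.
Proof. by apply: xext => i; rewrite /= /vsub /vzero; ring. Qed.

Lemma xnorm_zero : xnorm (@xzero n m) = 0.
Proof.
have := xnorm_scal 0 (@xzero n m); rewrite Rabs_R0 Rmult_0_l => <-.
by congr xnorm; apply: xext => i; rewrite /= /vscal /vzero; ring.
Qed.

Lemma xsub4 (a b c d : X n m) :
  xnorm (xsub (xsub a b) (xsub c d)) <= xnorm (xsub a c) + xnorm (xsub b d).
Proof.
have -> : xsub (xsub a b) (xsub c d) = xsub (xsub a c) (xsub b d).
  by apply: xext => i; rewrite /= /vsub; ring.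
exact: xnorm_sub.
Qed.

Lemma xnorm_coords x y :
  xnorm (xsub x y) <= rsum (fun i => Rabs (x.1 i - y.1 i)) + rsum (fun j => Rabs (x.2 j - y.2 j)).
Proof.
apply: Rle_trans (xnorm_le _) _.
by have := vnorm_le_sumabs (xsub x y).1; have := vnorm_le_sumabs (xsub x y).2; rewrite /= /vsub; lra.
Qed.

Lemma Lcone_zero u : Lcone u (@xzero n m) = vdot u.1 u.1 - vdot u.2 u.2.
Proof. by rewrite /Lcone /xzero /= !vnorm_opp0 -!vnorm_sq; ring. Qed.

Lemma xsq_sub_le u w : xsq (xsub u w) <= 2 * xsq u + 2 * xsq w.
Proof.
have := vdot_self_nonneg (vadd u.1 w.1); have := vdot_self_nonneg (vadd u.2 w.2).
rewrite /xsq (_ : (xsub u w).1 = vsub u.1 w.1) // (_ : (xsub u w).2 = vsub u.2 w.2) //.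
rewrite !vdot_subl !vdot_subr !vdot_addl !vdot_addr (vdot_comm w.1) (vdot_comm w.2).
by lra.
Qed.

(* A linear growth bound |D| <= M |e| + b with a forcing term b gives
   2 e.D <= (2 M + b + 1) |e|^2 + b, using 2 |e| <= |e|^2 + 1. *)
Lemma perturbed_rate (e D : X n m) M b : 0 <= b ->
  xnorm D <= M * xnorm e + b -> 2 * xdot e D <= (2 * M + b + 1) * xsq e + b.
Proof.
move=> b0 Dbound; rewrite -xnorm_sq; have e0 := xnorm_nonneg e.
have := Rmult_le_compat_l (2 * xnorm e) _ _ ltac:(lra) Dbound.
have := xdot_le e D; have := Rmult_le_pos _ _ b0 (Rle_0_sqr (xnorm e - 1)).
by have := Rle_0_sqr (xnorm e); rewrite /Rsqr; nra.
Qed.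

Lemma Lcone_le_xsq u : Lcone u (@xzero n m) <= xsq u.
Proof. by rewrite Lcone_zero /xsq; have := vdot_self_nonneg u.2; lra. Qed.

(* [xsq] and [Lcone . 0] are quadratic forms with a common local Lipschitz
   bound; this is what makes them continuous along continuous curves. *)
Definition quad_lipschitz (phi : X n m -> R) :=
  forall u w, Rabs (phi u - phi w) <= 2 * xnorm (xsub u w) * (xnorm u + xnorm w).

(* Both |a|^2 + |z|^2 and |a|^2 - |z|^2 are of the form |a|^2 + s |z|^2
   with |s| <= 1. *)
Lemma quad_lipschitz_comb (s : R) : Rabs s <= 1 ->
  quad_lipschitz (fun u => vdot u.1 u.1 + s * vdot u.2 u.2).
Proof.
move=> s1 u w.
have d1 := sq_diff u.1 w.1; have d2 := sq_diff u.2 w.2.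
have a1 : vnorm (vsub u.1 w.1) <= xnorm (xsub u w) by exact: (xnorm_fst (xsub u w)).
have a2 : vnorm (vsub u.2 w.2) <= xnorm (xsub u w) by exact: (xnorm_snd (xsub u w)).
have := xnorm_fst u; have := xnorm_snd u; have := xnorm_fst w; have := xnorm_snd w.
have := vnorm_nonneg (vsub u.1 w.1); have := vnorm_nonneg (vsub u.2 w.2).
have := vnorm_nonneg u.1; have := vnorm_nonneg u.2.
have := vnorm_nonneg w.1; have := vnorm_nonneg w.2.
have := Rabs_triang (vdot u.1 u.1 - vdot w.1 w.1) (s * (vdot u.2 u.2 - vdot w.2 w.2)).
rewrite Rabs_mult.
have -> : vdot u.1 u.1 + s * vdot u.2 u.2 - (vdot w.1 w.1 + s * vdot w.2 w.2)
          = vdot u.1 u.1 - vdot w.1 w.1 + s * (vdot u.2 u.2 - vdot w.2 w.2) by ring.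
have := Rabs_pos s; have := Rabs_pos (vdot u.2 u.2 - vdot w.2 w.2).
by nra.
Qed.

Lemma xsq_quad_lipschitz : quad_lipschitz xsq.
Proof.
move=> u w; have := quad_lipschitz_comb (s := 1) ltac:(rewrite Rabs_R1; lra) u w.
by rewrite /xsq !Rmult_1_l.
Qed.

Lemma Lcone_quad_lipschitz : quad_lipschitz (fun u => Lcone u (@xzero n m)).
Proof.
move=> u w; have := quad_lipschitz_comb (s := -1) ltac:(rewrite Rabs_Ropp Rabs_R1; lra) u w.
by rewrite !Lcone_zero; congr (Rabs _ <= _); ring.
Qed.
Lemma Lcone_margin u w P acc mg : xnorm u <= P -> xnorm (xsub w u) < acc -> acc <= 1 ->
  acc * (2 * (2 * P + 1)) < mg -> mg <= Lcone u (@xzero n m) -> 0 < Lcone w (@xzero n m).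
Proof.
move=> uP wu acc1 acc_mg Lu.
have wP : xnorm w <= P + 1.
  by have := xnorm_tri w u (@xzero n m); rewrite !xsub_zero; lra.
have lip := Lcone_quad_lipschitz w u.
have sum : xnorm w + xnorm u <= 2 * P + 1 by lra.
have := Rmult_le_compat_l (2 * xnorm (xsub w u)) _ _ ltac:(have := xnorm_nonneg (xsub w u); lra) sum.
have := Rmult_lt_compat_r (2 * (2 * P + 1)) _ _ ltac:(have := xnorm_nonneg u; lra) wu.
by have := Rle_abs (Lcone u (@xzero n m) - Lcone w (@xzero n m)); rewrite Rabs_minus_sym; lra.
Qed.
End PhaseSpace.

Lemma fin_delta k (P : 'I_k -> R -> Prop) :
  (forall i d d', 0 < d' <= d -> P i d -> P i d') ->
  (forall i, exists d, 0 < d /\ P i d) -> exists d, 0 < d /\ forall i, P i d.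
Proof.
move=> mono exP.
have partial N : (N <= k)%N -> exists d, 0 < d /\ forall i : 'I_k, (i < N)%N -> P i d.
  elim: N => [|N IH] ltNk; first by exists 1; split => //; lra.
  have [d [d0 Pd]] := IH (ltnW ltNk).
  have [e [e0 Pe]] := exP (Ordinal ltNk).
  have de0 : 0 < Rmin d e by exact: Rmin_pos.
  exists (Rmin d e); split => // i; rewrite ltnS leq_eqVlt => /orP [/eqP iN | ltiN].
    have -> : i = Ordinal ltNk by apply: val_inj.
    by apply: mono Pe; split => //; exact: Rmin_r.
  by apply: mono (Pd i ltiN); split => //; exact: Rmin_l.
have [d [d0 Pd]] := partial k (leqnn k).
by exists d; split => // i; apply: Pd.
Qed.

Lemma small_factor K e : 0 <= K -> 0 < e -> exists a, 0 < a /\ a <= 1 /\ a * K < e.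
Proof.
move=> K0 e0; exists (Rmin 1 (e / (K + 1))).
have pos : 0 < e / (K + 1) by apply: Rdiv_lt_0_compat; lra.
split; first by apply: Rmin_pos; lra.
split; first exact: Rmin_l.
have le : Rmin 1 (e / (K + 1)) * K <= e / (K + 1) * K.
  by apply: Rmult_le_compat_r => //; exact: Rmin_r.
apply: Rle_lt_trans le _.
have -> : e / (K + 1) * K = e - e / (K + 1) by field; lra.
by lra.
Qed.

Lemma linear_beats a K : 0 < a -> exists T, 0 <= T /\ K <= a * T.
Proof.
move=> a0; exists (Rmax 0 (K / a)); split; first exact: Rmax_l.
have : K / a <= Rmax 0 (K / a) := Rmax_r _ _.
by move=> le; have := Rmult_le_compat_l a _ _ (Rlt_le _ _ a0) le; rewrite /Rdiv -Rmult_assoc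
   (Rmult_comm a K) Rmult_assoc Rinv_r; lra.
Qed.

Lemma real_ind (T : R) (Q : R -> Prop) :
  0 <= T ->
  (forall s t, s <= t -> Q t -> Q s) ->
  (forall s, s < 0 -> Q s) ->
  (forall tau, 0 <= tau <= T -> (forall s, s < tau -> Q s) ->
     exists eta, 0 < eta /\ Q (tau + eta)) ->
  Q T.
Proof.
move=> T0 down neg step.
set S := fun t => t <= T /\ Q t.
have [sig [ub lub]] : {sig | is_lub S sig}.
  by apply: completeness; [exists T => t [] | exists (-1); split; [lra | apply: neg; lra]].
have sigT : sig <= T by apply: lub => t [].
have below : forall s, s < sig -> Q s.
  move=> s ltss; apply: NNPP => nQs.
  suff : sig <= s by lra.
  apply: lub => t [tT Qt]; apply: Rnot_lt_le => ltst.
  by apply: nQs; apply: down Qt; lra.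
have [sig0 | sig0] := Rle_lt_dec 0 sig.
  have [eta [eta0 Qe]] := step sig (conj sig0 sigT) below.
  have [le | lt] := Rle_lt_dec (sig + eta) T.
    have : sig + eta <= sig by apply: ub.
    lra.
  by apply: down Qe; lra.
have [eta [eta0 Qe]] := step 0 (conj (Rle_refl 0) T0) neg.
have Qm : Q (Rmin eta T) by apply: down Qe; have := Rmin_l eta T; lra.
have : Rmin eta T <= sig by apply: ub; split; [exact: Rmin_r | done].
have : 0 <= Rmin eta T by apply: Rmin_glb; lra.
lra.
Qed.

Lemma nondecr (h h' : R -> R) (T : R) :
  0 <= T ->
  (forall t, 0 < t <= T -> derivable_pt_lim h t (h' t)) ->
  (forall t, 0 < t < T -> 0 <= h' t) ->
  (forall eps, 0 < eps -> exists delta, 0 < delta /\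
     forall t, 0 <= t < delta -> Rabs (h t - h 0) < eps) ->
  h 0 <= h T.
Proof.
move=> T0 dh h'0 rc0.
have [-> | T0'] := Req_dec T 0; first lra.
have inner : forall s, 0 < s < T -> h s <= h T.
  move=> s s0; have [c [incr c0]] := @MVT_cor2 h h' s T (proj2 s0) (fun c c0 => dh c ltac:(lra)).
  by have := h'0 c ltac:(lra); nra.
apply: Rnot_lt_le => lt0.
have [d [d0 hd]] := rc0 (h 0 - h T) ltac:(lra).
set s := Rmin (d / 2) (T / 2).
have s0 : 0 < s by apply: Rmin_pos; lra.
have sd : s <= d / 2 := Rmin_l _ _.
have sT : s <= T / 2 := Rmin_r _ _.
have := inner s ltac:(lra); have := hd s ltac:(lra).
by rewrite Rabs_minus_sym; have := Rle_abs (h 0 - h s); lra.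
Qed.

Lemma cont_pt_eps f s : continuity_pt f s -> forall eps, 0 < eps -> exists delta, 0 < delta /\
  forall x, Rabs (x - s) < delta -> Rabs (f x - f s) < eps.
Proof.
move=> fc eps eps0; have [d [d0 hd]] := fc eps eps0; exists d; split => // x xs.
have [-> | ne] := Req_dec x s; first by rewrite Rminus_diag Rabs_R0.
by apply: hd; split; [split; [exact: I | auto] | exact: xs].
Qed.

Lemma cont_of_eps f s : (forall eps, 0 < eps -> exists delta, 0 < delta /\
  forall x, Rabs (x - s) < delta -> Rabs (f x - f s) < eps) -> continuity_pt f s.
Proof.
move=> fe eps eps0; have [d [d0 hd]] := fe eps eps0.
by exists d; split => // x [_ xs]; exact: hd.
Qed.

Lemma exp_mono a b : a <= b -> exp a <= exp b.
Proof. by case=> [lt | ->]; [left; exact: exp_increasing | lra]. Qed.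

Lemma derivable_pt_lim_eq f t l l' : derivable_pt_lim f t l -> l = l' -> derivable_pt_lim f t l'.
Proof. by move=> fl <-. Qed.

Lemma deriv_bigsum (I : Type) (r : seq I) (F : I -> R -> R) (F' : I -> R) t :
  (forall i, derivable_pt_lim (F i) t (F' i)) ->
  derivable_pt_lim (fun s => \big[Rplus/R0]_(i <- r) F i s) t (\big[Rplus/R0]_(i <- r) F' i).
Proof.
move=> dF; elim: r => [|a r IH].
  rewrite big_nil; apply: (derivable_pt_lim_eq (l := 0)) => //.
  have -> : (fun s => \big[Rplus/R0]_(i <- [::]) F i s) = fun _ => 0.
    by apply: functional_extensionality => s; rewrite big_nil.
  exact: derivable_pt_lim_const.
rewrite big_cons.
have -> : (fun s => \big[Rplus/R0]_(i <- a :: r) F i s)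
          = (fun s => F a s + \big[Rplus/R0]_(i <- r) F i s).
  by apply: functional_extensionality => s; rewrite big_cons.
exact: derivable_pt_lim_plus.
Qed.

Lemma deriv_vdot k (u w : R -> vec k) (du dw : vec k) t :
  (forall i, derivable_pt_lim (fun s => u s i) t (du i)) ->
  (forall i, derivable_pt_lim (fun s => w s i) t (dw i)) ->
  derivable_pt_lim (fun s => vdot (u s) (w s)) t (vdot du (w t) + vdot (u t) dw).
Proof.
move=> du_ dw_; rewrite /vdot -rsum_add.
rewrite /rsum; apply: (@deriv_bigsum _ _ (fun i s => u s i * w s i)) => i.
by apply: derivable_pt_lim_eq; [exact: derivable_pt_lim_mult (du_ i) (dw_ i) | ].
Qed.

Definition right_cont0 (h : R -> R) := forall eps, 0 < eps -> exists delta, 0 < delta /\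
  forall t, 0 <= t < delta -> Rabs (h t - h 0) < eps.

Lemma right_cont0_of_cont h : continuity_pt h 0 -> right_cont0 h.
Proof.
move=> hc eps eps0; have [d [d0 hd]] := cont_pt_eps hc eps0.
by exists d; split => // t t0; apply: hd; rewrite Rminus_0_r Rabs_right; lra.
Qed.

Lemma right_cont0_of_derivable h l : derivable_pt_lim h 0 l -> right_cont0 h.
Proof.
by move=> dh; apply: right_cont0_of_cont; apply: derivable_continuous_pt; exists l.
Qed.

Lemma right_cont0_const c : right_cont0 (fun _ => c).
Proof. by move=> eps eps0; exists 1; split => [|t _]; rewrite ?Rminus_diag ?Rabs_R0; lra. Qed.

Lemma right_cont0_ext h1 h2 :
  (forall t, 0 <= t -> h1 t = h2 t) -> right_cont0 h1 -> right_cont0 h2.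
Proof.
move=> e12 rc1 eps eps0; have [d [d0 hd]] := rc1 eps eps0.
by exists d; split => // t t0; rewrite -!e12; [exact: hd | lra | lra].
Qed.

Lemma right_cont0_plus h1 h2 :
  right_cont0 h1 -> right_cont0 h2 -> right_cont0 (fun t => h1 t + h2 t).
Proof.
move=> rc1 rc2 eps eps0.
have [d1 [d10 hd1]] := rc1 (eps / 2) ltac:(lra).
have [d2 [d20 hd2]] := rc2 (eps / 2) ltac:(lra).
exists (Rmin d1 d2); split; first exact: Rmin_pos.
move=> t t0; have := hd1 t ltac:(have := Rmin_l d1 d2; lra).
have := hd2 t ltac:(have := Rmin_r d1 d2; lra).
have := Rabs_triang (h1 t - h1 0) (h2 t - h2 0).
have -> : h1 t + h2 t - (h1 0 + h2 0) = h1 t - h1 0 + (h2 t - h2 0) by ring.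
lra.
Qed.

Lemma right_cont0_mult h1 h2 :
  right_cont0 h1 -> right_cont0 h2 -> right_cont0 (fun t => h1 t * h2 t).
Proof.
move=> rc1 rc2 eps eps0.
set a := h1 0; set b := h2 0; have a0 := Rabs_pos a; have b0 := Rabs_pos b.
set e1 := eps / (2 * (Rabs b + 1)); set e2 := Rmin 1 (eps / (2 * (Rabs a + 1))).
have e10 : 0 < e1 by apply: Rdiv_lt_0_compat; lra.
have e20 : 0 < e2 by apply: Rmin_pos; [lra | apply: Rdiv_lt_0_compat; lra].
have [d1 [d10 hd1]] := rc1 e1 e10; have [d2 [d20 hd2]] := rc2 e2 e20.
exists (Rmin d1 d2); split; first exact: Rmin_pos.
move=> t t0; have q1 : Rabs (h1 t - a) < e1 := hd1 t ltac:(have := Rmin_l d1 d2; lra).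
have q2 : Rabs (h2 t - b) < e2 := hd2 t ltac:(have := Rmin_r d1 d2; lra).
have e2_1 : e2 <= 1 := Rmin_l _ _.
have e2_eps : e2 <= eps / (2 * (Rabs a + 1)) := Rmin_r _ _.
have q2a : Rabs (h2 t - b) <= 1 by lra.
have q2b : Rabs (h2 t - b) <= eps / (2 * (Rabs a + 1)) by lra.
have h2t : Rabs (h2 t) <= Rabs b + 1.
  by have := Rabs_triang (h2 t - b) b; rewrite (_ : h2 t - b + b = h2 t); [lra | ring].
have -> : h1 t * h2 t - h1 0 * h2 0 = (h1 t - a) * h2 t + a * (h2 t - b) by rewrite /a /b; ring.
apply: Rle_lt_trans (Rabs_triang _ _) _; rewrite !Rabs_mult.
have r1 : Rabs (h1 t - a) * Rabs (h2 t) < e1 * (Rabs b + 1).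
  by have := Rabs_pos (h1 t - a); have := Rabs_pos (h2 t); nra.
have r2 : Rabs a * Rabs (h2 t - b) <= Rabs a * (eps / (2 * (Rabs a + 1))).
  by apply: Rmult_le_compat_l.
have f1 : e1 * (Rabs b + 1) = eps / 2 by rewrite /e1; field; lra.
have f2 : Rabs a * (eps / (2 * (Rabs a + 1))) <= eps / 2.
  apply: (Rmult_le_reg_r (Rabs a + 1)); first lra.
  rewrite (_ : Rabs a * (eps / (2 * (Rabs a + 1))) * (Rabs a + 1) = Rabs a * (eps / 2)).
    by nra.
  by field; lra.
lra.
Qed.

Lemma right_cont0_scal c h : right_cont0 h -> right_cont0 (fun t => c * h t).
Proof. exact: right_cont0_mult (right_cont0_const c). Qed.

Lemma deriv_expk k t : derivable_pt_lim (fun s => exp (k * s)) t (k * exp (k * t)).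
Proof.
have dk : derivable_pt_lim (fun s => k * s) t k.
  by apply: derivable_pt_lim_eq; [exact: derivable_pt_lim_scal (derivable_pt_lim_id t) | ring].
apply: derivable_pt_lim_eq.
  exact: derivable_pt_lim_comp dk (derivable_pt_lim_exp _).
by rewrite Rmult_comm.
Qed.

(* Differential Gronwall inequality: D' <= c D on (0, T) gives
   D T <= D 0 exp (c T); indeed D exp(-c t) is nonincreasing. *)
Lemma gronwall (D D' : R -> R) c T : 0 <= T ->
  (forall t, 0 < t <= T -> derivable_pt_lim D t (D' t)) ->
  (forall t, 0 < t < T -> D' t <= c * D t) -> right_cont0 D -> D T <= D 0 * exp (c * T).
Proof.
move=> T0 dD Dc rcD.
set h := fun t => - (D t * exp (- c * t)).
set h' := fun t => - (D' t * exp (- c * t) + D t * (- c * exp (- c * t))).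
have dh : forall t, 0 < t <= T -> derivable_pt_lim h t (h' t).
  move=> t t0; apply: derivable_pt_lim_opp.
  by apply: derivable_pt_lim_mult; [exact: dD | exact: deriv_expk].
have h'0 : forall t, 0 < t < T -> 0 <= h' t.
  by move=> t t0; rewrite /h'; have := Dc t t0; have := exp_pos (- c * t); nra.
have rch : right_cont0 h.
  apply: (right_cont0_ext _ (right_cont0_scal (-1)
            (right_cont0_mult rcD (right_cont0_of_derivable (deriv_expk (- c) 0))))).
  by move=> t _; rewrite /h; ring.
have := nondecr T0 dh h'0 rch; rewrite /h Rmult_0_r exp_0 Rmult_1_r => le0.
have inv : exp (- c * T) * exp (c * T) = 1.
  by rewrite -exp_plus (_ : - c * T + c * T = 0) ?exp_0 //; ring.
have := Rmult_le_compat_r _ _ _ (Rlt_le _ _ (exp_pos (c * T))) (Ropp_le_cancel _ _ le0).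
by rewrite Rmult_assoc inv Rmult_1_r.
Qed.

(* Integrating factor: for continuous b there is W > 0 with W 0 = 1 and
   W' = - b W on [0, T], namely W t = exp (- int_0^t b). *)
Lemma integrating_factor (b : R -> R) (T : R) : 0 <= T -> (forall s, continuity_pt b s) ->
  exists W : R -> R, (forall t, 0 < W t) /\ W 0 = 1 /\
    forall t, 0 <= t <= T -> derivable_pt_lim W t (- b t * W t).
Proof.
move=> T0 bc.
have le : -1 <= T + 1 by lra.
set P := primitive le (FTC_P1 le (fun x _ => bc x)).
exists (fun t => exp (P 0 - P t)); split; first by move=> t; exact: exp_pos.
split; first by rewrite Rminus_diag exp_0.
move=> t t0.
have dP : derivable_pt_lim P t (b t) by apply: RiemannInt_P28; lra.
have dE : derivable_pt_lim (fun s => P 0 - P s) t (0 - b t).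
  by apply: derivable_pt_lim_minus; [exact: derivable_pt_lim_const | exact: dP].
apply: derivable_pt_lim_eq; first exact: derivable_pt_lim_comp dE (derivable_pt_lim_exp _).
by ring.
Qed.

Section Curves.
Variables n m : nat.
Implicit Types u w gam : R -> X n m.

Definition curve_right_cont0 u := forall eps, 0 < eps -> exists delta, 0 < delta /\
  forall t, 0 <= t < delta -> xnorm (xsub (u t) (u 0)) < eps.

Definition curve_cont_on u T := forall s, 0 <= s <= T -> forall eps, 0 < eps ->
  exists delta, 0 < delta /\ forall s', 0 <= s' <= T -> Rabs (s' - s) < delta ->
    xnorm (xsub (u s') (u s)) < eps.

Lemma curve_right_cont0_sub u w : curve_right_cont0 u -> curve_right_cont0 w ->
  curve_right_cont0 (fun t => xsub (u t) (w t)).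
Proof.
move=> uc wc eps eps0.
have [d1 [d10 hd1]] := uc (eps / 2) ltac:(lra).
have [d2 [d20 hd2]] := wc (eps / 2) ltac:(lra).
exists (Rmin d1 d2); split; first exact: Rmin_pos.
move=> t t0; have := xsub4 (u t) (w t) (u 0) (w 0).
by have := hd1 t ltac:(have := Rmin_l d1 d2; lra); have := hd2 t ltac:(have := Rmin_r d1 d2; lra); lra.
Qed.

Lemma right_cont0_quad (phi : X n m -> R) u :
  quad_lipschitz phi -> curve_right_cont0 u -> right_cont0 (fun t => phi (u t)).
Proof.
move=> phiL uc eps eps0; set a := xnorm (u 0); have a0 : 0 <= a := xnorm_nonneg _.
set K := 2 * (2 * a + 1) + 1.
set e := Rmin 1 (eps / K).
have e0 : 0 < e by apply: Rmin_pos; [lra | apply: Rdiv_lt_0_compat; rewrite /K; lra].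
have e1 : e <= 1 := Rmin_l _ _.
have eK : e * K <= eps.
  have : e <= eps / K := Rmin_r _ _.
  by move=> le; have := Rmult_le_compat_r K _ _ ltac:(rewrite /K; lra) le;
     rewrite /Rdiv Rmult_assoc Rinv_l; [lra | rewrite /K; lra].
have [d [d0 hd]] := uc e e0; exists d; split => // t t0.
have ut : xnorm (xsub (u t) (u 0)) < e := hd t t0.
have := xnorm_tri (u t) (u 0) (@xzero n m); rewrite !xsub_zero -/a => bound.
apply: Rle_lt_trans (phiL _ _) _.
have := xnorm_nonneg (xsub (u t) (u 0)); have := xnorm_nonneg (u t).
by rewrite -/a /K in eK *; nra.
Qed.

Lemma solution_cont u V : solves_nonneg u V ->
  forall s, 0 <= s -> forall eps, 0 < eps -> exists delta, 0 < delta /\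
    forall s', 0 <= s' -> Rabs (s' - s) < delta -> xnorm (xsub (u s') (u s)) < eps.
Proof.
move=> [du u0] s s0 eps eps0.
have [-> | sne] := Req_dec s 0.
  have [d [d0 hd]] := u0 eps eps0; exists d; split => // s' s'0 s'd.
  by apply: hd; split => //; have := Rle_abs (s' - 0); lra.
have [du1 du2] := du s ltac:(lra).
set N := INR n + INR m + 1; have N0 : 0 < N by have := pos_INR n; have := pos_INR m; rewrite /N; lra.
set e := eps / N; have e0 : 0 < e by apply: Rdiv_lt_0_compat.
have coord_cont (h : R -> R) l : derivable_pt_lim h s l -> exists d, 0 < d /\
    forall s', Rabs (s' - s) < d -> Rabs (h s' - h s) < e.
  by move=> dh; apply: cont_pt_eps e0; apply: derivable_continuous_pt; exists l.
have mono (k : nat) (h : 'I_k -> R -> R) : forall i d d', 0 < d' <= d ->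
    (forall s', Rabs (s' - s) < d -> Rabs (h i s' - h i s) < e) ->
    (forall s', Rabs (s' - s) < d' -> Rabs (h i s' - h i s) < e).
  by move=> i d d' dd' hd s' s'd; apply: hd; lra.
have [d1 [d10 hd1]] := fin_delta (mono _ (fun i t => (u t).1 i)) (fun i => coord_cont _ _ (du1 i)).
have [d2 [d20 hd2]] := fin_delta (mono _ (fun j t => (u t).2 j)) (fun j => coord_cont _ _ (du2 j)).
exists (Rmin d1 d2); split; first exact: Rmin_pos.
move=> s' _ s'd; apply: Rle_lt_trans (xnorm_coords _ _) _.
have := rsum_le_const (fun i => Rlt_le _ _ (hd1 i s' ltac:(have := Rmin_l d1 d2; lra))).
have := rsum_le_const (fun j => Rlt_le _ _ (hd2 j s' ltac:(have := Rmin_r d1 d2; lra))).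
have Ne : N * e = eps by rewrite /e; field; lra.
by have := pos_INR n; have := pos_INR m; rewrite /N in Ne N0; nra.
Qed.

Lemma solution_cont_on u V T : solves_nonneg u V -> curve_cont_on u T.
Proof.
move=> su s [s0 _] eps eps0; have [d [d0 hd]] := solution_cont su s0 eps0.
by exists d; split => // s' [s'0 _]; exact: hd.
Qed.

Lemma tube (U : X n m -> Prop) (rho : X n m -> X n m -> R) (b : X n m -> R) gam T :
  is_open U ->
  (forall p q r, rho p q <= rho p r + rho q r) ->
  (forall p q, b p <= b q + rho p q) ->
  (forall c, U c -> forall eps, 0 < eps -> exists delta, 0 < delta /\
     forall p, U p -> xnorm (xsub p c) < delta -> rho p c < eps) ->
  0 <= T -> (forall s, 0 <= s <= T -> U (gam s)) -> curve_cont_on gam T ->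
  forall eps, 0 < eps -> exists delta, 0 < delta /\ exists M, forall s, 0 <= s <= T ->
    forall p, xnorm (xsub p (gam s)) < delta -> U p /\ rho p (gam s) < eps /\ b p <= M.
Proof.
move=> Uopen rho_tri b_lip rho_cont T0 gamU gamc eps eps0.
set Q := fun t => exists delta, 0 < delta /\ exists M, forall s, 0 <= s <= t -> s <= T ->
  forall p, xnorm (xsub p (gam s)) < delta -> U p /\ rho p (gam s) < eps /\ b p <= M.
suff [d [d0 [M hM]]] : Q T.
  by exists d; split => //; exists M => s s0; apply: hM => //; lra.
apply: real_ind => //.
- move=> s t st [d [d0 [M hM]]]; exists d; split => //.
  by exists M => s' s'0 s'T; apply: hM => //; lra.
- by move=> s s0; exists 1; split; [lra | exists 0 => s'; lra].
move=> tau tau0 below.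
have [r0 [r00 hr0]] := Uopen _ (gamU tau tau0).
have [d1 [d10 hd1]] := rho_cont _ (gamU tau tau0) (eps / 2) ltac:(lra).
set d0 := Rmin r0 d1; have d00 : 0 < d0 by apply: Rmin_pos.
have d0r0 : d0 <= r0 := Rmin_l _ _; have d0d1 : d0 <= d1 := Rmin_r _ _.
have [eta [eta0 heta]] := gamc tau tau0 (d0 / 2) ltac:(lra).
have [d' [d'0 [M' hM']]] := below (tau - eta / 2) ltac:(lra).
exists (eta / 2); split; first lra.
exists (Rmin d' (d0 / 2)); split; first by apply: Rmin_pos; lra.
have dd' : Rmin d' (d0 / 2) <= d' := Rmin_l _ _.
have dd0 : Rmin d' (d0 / 2) <= d0 / 2 := Rmin_r _ _.
exists (Rmax M' (b (gam tau) + eps / 2)) => s s0 sT p ps.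
have [old | new] := Rle_lt_dec s (tau - eta / 2).
  have [Up [rp bp]] := hM' s ltac:(lra) sT p ltac:(lra).
  by split => //; split => //; have := Rmax_l M' (b (gam tau) + eps / 2); lra.
have s_tau : xnorm (xsub (gam s) (gam tau)) < d0 / 2.
  by apply: heta; [lra | apply: Rabs_def1; lra].
have p_tau : xnorm (xsub p (gam tau)) < d0 by have := xnorm_tri p (gam s) (gam tau); lra.
have Up : U p by apply: hr0; lra.
have r1 := hd1 p Up ltac:(lra).
have r2 := hd1 (gam s) (gamU s ltac:(lra)) ltac:(lra).
split => //; split; first by have := rho_tri p (gam s) (gam tau); lra.
by have := b_lip p (gam tau); have := Rmax_r M' (b (gam tau) + eps / 2); lra.
Qed.
End Curves.

Definition mdist p q (A B : mat p q) := msum (fun i j => A i j - B i j).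

Lemma mdist_tri p q (A B C : mat p q) : mdist A B <= mdist A C + mdist B C.
Proof.
rewrite /mdist /msum -rsum_add; apply: rsum_le => i; rewrite -rsum_add.
apply: rsum_le => j; have := Rabs_triang (A i j - C i j) (- (B i j - C i j)).
by rewrite Rabs_Ropp (_ : A i j - C i j + - (B i j - C i j) = A i j - B i j); [lra | ring].
Qed.

Lemma msum_lip p q (A B : mat p q) : msum A <= msum B + mdist A B.
Proof.
rewrite /mdist /msum -rsum_add; apply: rsum_le => i; rewrite -rsum_add.
apply: rsum_le => j; have := Rabs_triang (B i j) (A i j - B i j).
by rewrite (_ : B i j + (A i j - B i j) = A i j); [lra | ring].
Qed.

Lemma mdist_cont n m p q (U : X n m -> Prop) (A : X n m -> mat p q) :
  (forall i j, cont_on U (fun x => A x i j)) ->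
  forall c, U c -> forall eps, 0 < eps -> exists delta, 0 < delta /\
    forall z, U z -> xnorm (xsub z c) < delta -> mdist (A z) (A c) < eps.
Proof.
move=> Ac c Uc eps eps0.
set K := INR p * INR q + 1; have K0 : 0 < K by have := pos_INR p; have := pos_INR q; rewrite /K; nra.
set e := eps / K; have e0 : 0 < e by apply: Rdiv_lt_0_compat.
set P := fun i j d => forall z, U z -> xnorm (xsub z c) < d -> Rabs (A z i j - A c i j) < e.
have Pmono : forall i j d d', 0 < d' <= d -> P i j d -> P i j d'.
  by move=> i j d d' dd' hd z Uz zd; apply: hd => //; lra.
have row i : exists d, 0 < d /\ forall j, P i j d.
  apply: fin_delta => [j d d' dd'|j]; first exact: Pmono.
  exact: Ac i j c Uc e e0.
have [d [d0 hd]] := fin_delta (fun i d d' dd' Pd j => Pmono i j d d' dd' (Pd j)) row.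
exists d; split => // z Uz zd.
apply: Rle_lt_trans (rsum_le_const (c := INR q * e) _) _.
  by move=> i; apply: rsum_le_const => j; apply: Rlt_le; exact: hd.
have : INR p * (INR q * e) < K * e by rewrite /K; nra.
by rewrite /e (_ : K * (eps / K) = eps); [lra | field; lra].
Qed.

Section MeanValue.
Variables n m : nat.

Definition seg_pt (p1 p2 : X n m) th := xadd p2 (xscal th (xsub p1 p2)).

Definition homogeneous k (D : X n m -> vec k) := forall h v, D (xscal h v) = vscal h (D v).

Lemma frechet_line k (F DF : X n m -> vec k) p d (e : vec k) th :
  frechet_at F DF (xadd p (xscal th d)) -> homogeneous DF ->
  derivable_pt_lim (fun t => vdot e (F (xadd p (xscal t d)))) th (vdot e (DF d)).
Proof.
move=> dF DFh eps eps0.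
set c := vnorm e * xnorm d + 1.
have c0 : 0 < c by have := vnorm_nonneg e; have := xnorm_nonneg d; rewrite /c; nra.
have [df [df0 hdf]] := dF (eps / (2 * c)) ltac:(apply: Rdiv_lt_0_compat; lra).
have dpos : 0 < df / (xnorm d + 1) by apply: Rdiv_lt_0_compat => //; have := xnorm_nonneg d; lra.
exists (mkposreal _ dpos) => h h0 /= hsmall.
have step : xsub (xadd p (xscal (th + h) d)) (xadd p (xscal th d)) = xscal h d.
  by apply: xext => i; rewrite /= /vsub /vadd /vscal; ring.
have hd_small : xnorm (xscal h d) < df.
  rewrite xnorm_scal; have := xnorm_nonneg d; have := Rabs_pos h => *.
  have : Rabs h * (xnorm d + 1) < df.
    have := Rmult_lt_compat_r (xnorm d + 1) _ _ ltac:(lra) hsmall.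
    by rewrite /Rdiv Rmult_assoc Rinv_l; lra.
  by nra.
have := hdf (xadd p (xscal (th + h) d)); rewrite step => /(_ hd_small).
rewrite DFh xnorm_scal.
set F1 := F (xadd p (xscal (th + h) d)); set F0 := F (xadd p (xscal th d)) => rem.
have -> : (vdot e F1 - vdot e F0) / h - vdot e (DF d)
          = vdot e (vsub (vsub F1 F0) (vscal h (DF d))) / h.
  by rewrite !vdot_subr vdot_scalr; field.
have hpos : 0 < Rabs h by apply: Rabs_pos_lt.
rewrite /Rdiv Rabs_mult Rabs_inv.
apply: (Rmult_lt_reg_r (Rabs h)) => //; rewrite Rmult_assoc Rinv_l ?Rmult_1_r; last lra.
apply: Rle_lt_trans (cauchy_schwarz _ _) _.
set r := eps / (2 * c); have r0 : 0 < r by apply: Rdiv_lt_0_compat; lra.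
have rc : r * c = eps / 2 by rewrite /r; field; lra.
have de_c : xnorm d * vnorm e <= c by rewrite /c; lra.
have := Rmult_le_compat_l (vnorm e) _ _ (vnorm_nonneg e) rem.
have := Rmult_le_compat_l (r * Rabs h) _ _ ltac:(nra) de_c.
have -> : vnorm e * (r * (Rabs h * xnorm d)) = r * Rabs h * (xnorm d * vnorm e) by ring.
by nra.
Qed.

Lemma mean_value_bound (f : X n m -> vec n) (g : X n m -> vec m)
  (Df : X n m -> X n m -> vec n) (Dg : X n m -> X n m -> vec m) p1 p2 M :
  (forall th, 0 <= th <= 1 ->
     frechet_at f (Df (seg_pt p1 p2 th)) (seg_pt p1 p2 th) /\
     frechet_at g (Dg (seg_pt p1 p2 th)) (seg_pt p1 p2 th) /\
     homogeneous (Df (seg_pt p1 p2 th)) /\ homogeneous (Dg (seg_pt p1 p2 th)) /\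
     xnorm (Df (seg_pt p1 p2 th) (xsub p1 p2), Dg (seg_pt p1 p2 th) (xsub p1 p2))
       <= M * xnorm (xsub p1 p2)) ->
  xnorm (xsub (f p1, g p1) (f p2, g p2)) <= M * xnorm (xsub p1 p2).
Proof.
move=> hyp; set d := xsub p1 p2; set e := xsub (f p1, g p1) (f p2, g p2).
(* phi t = e . F(p2 + t d) has phi 1 - phi 0 = |e|^2 and phi' <= |e| M |d| *)
set phi := fun t => vdot e.1 (f (seg_pt p1 p2 t)) + vdot e.2 (g (seg_pt p1 p2 t)).
set phi' := fun t => vdot e.1 (Df (seg_pt p1 p2 t) d) + vdot e.2 (Dg (seg_pt p1 p2 t) d).
have dphi : forall t, 0 <= t <= 1 -> derivable_pt_lim phi t (phi' t).
  move=> t t01; have [df [dg [hf [hg _]]]] := hyp t t01.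
  by apply: derivable_pt_lim_plus; apply: frechet_line.
have [c [incr c01]] := @MVT_cor2 phi phi' 0 1 Rlt_0_1 dphi.
have phi01 : phi 1 - phi 0 = xsq e.
  rewrite /phi; have -> : seg_pt p1 p2 1 = p1 by apply: xext => i; rewrite /= /vadd /vscal /vsub; ring.
  have -> : seg_pt p1 p2 0 = p2 by apply: xext => i; rewrite /= /vadd /vscal /vsub; ring.
  by rewrite /xsq /e /= !vdot_subr; ring.
have [_ [_ [_ [_ Mc]]]] := hyp c ltac:(lra).
have phic : phi' c <= xnorm e * (M * xnorm d).
  apply: Rle_trans (xdot_le e (Df (seg_pt p1 p2 c) d, Dg (seg_pt p1 p2 c) d)) _.
  by apply: Rmult_le_compat_l; [exact: xnorm_nonneg | exact: Mc].
have [_ [_ [_ [_ M0]]]] := hyp 0 ltac:(lra).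
have Md : 0 <= M * xnorm d by apply: Rle_trans (xnorm_nonneg _) M0.
rewrite phi01 Rminus_0_r Rmult_1_r -xnorm_sq in incr.
have [-> | e0] := Req_dec (xnorm e) 0; first by [].
have epos : 0 < xnorm e by have := xnorm_nonneg e; lra.
by apply: (Rmult_le_reg_l (xnorm e)) => //; lra.
Qed.
End MeanValue.

Section Dynamics.
Variables (n m : nat) (f : X n m -> vec n) (g : X n m -> vec m) (U Gamma : X n m -> Prop).
Variables (Daf : X n m -> mat n n) (Dzf : X n m -> mat n m)
          (Dag : X n m -> mat m n) (Dzg : X n m -> mat m m).
Hypothesis HUopen : is_open U.
Hypothesis Hfdiff : forall x, U x ->
  frechet_at f (fun v => vadd (mapp (Daf x) v.1) (mapp (Dzf x) v.2)) x.
Hypothesis Hgdiff : forall x, U x ->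
  frechet_at g (fun v => vadd (mapp (Dag x) v.1) (mapp (Dzg x) v.2)) x.
Hypothesis HDafc : forall i j, cont_on U (fun x => Daf x i j).
Hypothesis HDzfc : forall i j, cont_on U (fun x => Dzf x i j).
Hypothesis HDagc : forall i j, cont_on U (fun x => Dag x i j).
Hypothesis HDzgc : forall i j, cont_on U (fun x => Dzg x i j).
Variable Phi : R -> X n m -> X n m.
Hypothesis HPhi0 : forall x, Gamma x -> Phi 0 x = x.
Hypothesis HPhi : forall x, Gamma x -> solves_nonneg (fun t => Phi t x) (fun _ p => (f p, g p)).
Hypothesis HGU : forall x, Gamma x -> U x.
Hypothesis HGinv : forall x t, Gamma x -> 0 <= t -> Gamma (Phi t x).

Definition Ff p : X n m := (f p, g p).
Definition DFp p v := DFapp Daf Dzf Dag Dzg p v.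
Definition JB p := msum (Daf p) + msum (Dzf p) + msum (Dag p) + msum (Dzg p).
Definition JD p c :=
  mdist (Daf p) (Daf c) + mdist (Dzf p) (Dzf c) + mdist (Dag p) (Dag c) + mdist (Dzg p) (Dzg c).

Lemma JB_nonneg p : 0 <= JB p.
Proof.
have := msum_nonneg (Daf p); have := msum_nonneg (Dzf p).
by have := msum_nonneg (Dag p); have := msum_nonneg (Dzg p); rewrite /JB; lra.
Qed.

Lemma JD_nonneg p c : 0 <= JD p c.
Proof.
rewrite /JD /mdist; have := msum_nonneg (fun i j => Daf p i j - Daf c i j).
have := msum_nonneg (fun i j => Dzf p i j - Dzf c i j).
have := msum_nonneg (fun i j => Dag p i j - Dag c i j).
by have := msum_nonneg (fun i j => Dzg p i j - Dzg c i j); lra.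
Qed.

Lemma block_bound (A1 : mat n n) (A2 : mat n m) (A3 : mat m n) (A4 : mat m m) v :
  xnorm (vadd (mapp A1 v.1) (mapp A2 v.2), vadd (mapp A3 v.1) (mapp A4 v.2))
    <= (msum A1 + msum A2 + msum A3 + msum A4) * xnorm v.
Proof.
apply: Rle_trans (xnorm_le _) _ => /=.
have := vnorm_add (mapp A1 v.1) (mapp A2 v.2); have := vnorm_add (mapp A3 v.1) (mapp A4 v.2).
have := mapp_bound A1 v.1; have := mapp_bound A2 v.2.
have := mapp_bound A3 v.1; have := mapp_bound A4 v.2.
have := xnorm_fst v; have := xnorm_snd v.
have := msum_nonneg A1; have := msum_nonneg A2; have := msum_nonneg A3; have := msum_nonneg A4.
by nra.
Qed.

Lemma DF_bound p v : xnorm (DFp p v) <= JB p * xnorm v.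
Proof. exact: block_bound. Qed.

Lemma DF_diff p c v : xnorm (xsub (DFp p v) (DFp c v)) <= JD p c * xnorm v.
Proof.
have -> : xsub (DFp p v) (DFp c v) =
  (vadd (mapp (fun i j => Daf p i j - Daf c i j) v.1) (mapp (fun i j => Dzf p i j - Dzf c i j) v.2),
   vadd (mapp (fun i j => Dag p i j - Dag c i j) v.1) (mapp (fun i j => Dzg p i j - Dzg c i j) v.2)).
  by apply: xext => i; rewrite /= -!mapp_msub /vsub /vadd; ring.
exact: block_bound.
Qed.

Lemma DF_sub p u w : DFp p (xsub u w) = xsub (DFp p u) (DFp p w).
Proof. by apply: xext => i; rewrite /DFp /DFapp /= !mapp_sub /vsub /vadd; ring. Qed.

Lemma JD_tri p q r : JD p q <= JD p r + JD q r.
Proof.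
have := mdist_tri (Daf p) (Daf q) (Daf r); have := mdist_tri (Dzf p) (Dzf q) (Dzf r).
have := mdist_tri (Dag p) (Dag q) (Dag r); have := mdist_tri (Dzg p) (Dzg q) (Dzg r).
by rewrite /JD; lra.
Qed.

Lemma JB_lip p q : JB p <= JB q + JD p q.
Proof.
have := msum_lip (Daf p) (Daf q); have := msum_lip (Dzf p) (Dzf q).
have := msum_lip (Dag p) (Dag q); have := msum_lip (Dzg p) (Dzg q).
by rewrite /JB /JD; lra.
Qed.

Lemma JD_cont c : U c -> forall eps, 0 < eps -> exists delta, 0 < delta /\
  forall p, U p -> xnorm (xsub p c) < delta -> JD p c < eps.
Proof.
move=> Uc eps eps0; have e0 : 0 < eps / 4 by lra.
have [d1 [d10 h1]] := mdist_cont HDafc Uc e0; have [d2 [d20 h2]] := mdist_cont HDzfc Uc e0.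
have [d3 [d30 h3]] := mdist_cont HDagc Uc e0; have [d4 [d40 h4]] := mdist_cont HDzgc Uc e0.
exists (Rmin (Rmin d1 d2) (Rmin d3 d4)); split; first by repeat apply: Rmin_pos.
move=> p Up pc.
have := Rmin_l (Rmin d1 d2) (Rmin d3 d4); have := Rmin_r (Rmin d1 d2) (Rmin d3 d4).
have := Rmin_l d1 d2; have := Rmin_r d1 d2; have := Rmin_l d3 d4; have := Rmin_r d3 d4 => *.
have := h1 p Up ltac:(lra); have := h2 p Up ltac:(lra).
by have := h3 p Up ltac:(lra); have := h4 p Up ltac:(lra); rewrite /JD; lra.
Qed.

Lemma traj_U x s : Gamma x -> 0 <= s -> U (Phi s x).
Proof. by move=> Gx s0; apply: HGU; exact: HGinv. Qed.

Lemma jacobian_tube x T : Gamma x -> 0 <= T -> forall eps, 0 < eps ->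
  exists delta, 0 < delta /\ exists M, forall s, 0 <= s <= T -> forall p,
    xnorm (xsub p (Phi s x)) < delta -> U p /\ JD p (Phi s x) < eps /\ JB p <= M.
Proof.
move=> Gx T0; apply: (tube HUopen JD_tri JB_lip JD_cont T0).
- by move=> s [s0 _]; exact: traj_U.
- exact: solution_cont_on (HPhi Gx).
Qed.

Lemma jacobian_tube_bound x T : Gamma x -> 0 <= T ->
  exists rho M, 0 < rho /\ 0 <= M /\ forall s, 0 <= s <= T -> forall p,
    xnorm (xsub p (Phi s x)) < rho -> U p /\ JB p <= M.
Proof.
move=> Gx T0; have [rho [rho0 [M hM]]] := jacobian_tube Gx T0 Rlt_0_1.
exists rho, (Rmax 0 M); do 2!split => //; first exact: Rmax_l.
by move=> s sT p ps; have [Up [_ JBp]] := hM s sT p ps; have := Rmax_r 0 M; split => //; lra.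
Qed.

Lemma jacobian_bound x T : Gamma x -> 0 <= T ->
  exists M, 0 <= M /\ forall s, 0 <= s <= T -> JB (Phi s x) <= M.
Proof.
move=> Gx T0; have [rho [M [rho0 [M0 hM]]]] := jacobian_tube_bound Gx T0.
exists M; split => // s sT.
by have [] := hM s sT (Phi s x) ltac:(rewrite xsub_self xnorm_zero; lra).
Qed.

(* F is M-Lipschitz from the trajectory to any point of a tube of U on
   which DF is bounded by M (tubes are convex around each trajectory point). *)
Lemma F_lipschitz_near_traj x T delta M : Gamma x -> 0 <= T -> 0 < delta ->
  (forall s, 0 <= s <= T -> forall p, xnorm (xsub p (Phi s x)) < delta -> U p /\ JB p <= M) ->
  forall s, 0 <= s <= T -> forall p, xnorm (xsub p (Phi s x)) < delta ->
    xnorm (xsub (Ff p) (Ff (Phi s x))) <= M * xnorm (xsub p (Phi s x)).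
Proof.
move=> Gx T0 d0 hM s sT p ps.
apply: (mean_value_bound (Df := fun q v => vadd (mapp (Daf q) v.1) (mapp (Dzf q) v.2))
                         (Dg := fun q v => vadd (mapp (Dag q) v.1) (mapp (Dzg q) v.2))).
move=> th th01; set q := seg_pt p (Phi s x) th.
have qs : xsub q (Phi s x) = xscal th (xsub p (Phi s x)).
  by apply: xext => i; rewrite /= /vadd /vscal /vsub; ring.
have [Uq JBq] : U q /\ JB q <= M.
  apply: (hM s sT q); rewrite qs xnorm_scal Rabs_right; last lra.
  by have := xnorm_nonneg (xsub p (Phi s x)); nra.
have hom k (A : mat k n) (B : mat k m) : homogeneous (fun v : X n m => vadd (mapp A v.1) (mapp B v.2)).
  by move=> h v; rewrite /= !mapp_scal; apply: vext => i; rewrite /vscal /vadd; ring.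
do 4!(split; first by [exact: Hfdiff | exact: Hgdiff | exact: hom]).
have := DF_bound q (xsub p (Phi s x)); rewrite /DFp /DFapp.
by have := xnorm_nonneg (xsub p (Phi s x)); nra.
Qed.

Lemma deriv_xsq (u : R -> X n m) (du : X n m) t :
  (forall i, derivable_pt_lim (fun s => (u s).1 i) t (du.1 i)) ->
  (forall j, derivable_pt_lim (fun s => (u s).2 j) t (du.2 j)) ->
  derivable_pt_lim (fun s => xsq (u s)) t (2 * xdot (u t) du).
Proof.
move=> d1 d2; apply: derivable_pt_lim_eq.
  by apply: derivable_pt_lim_plus; apply: deriv_vdot.
by rewrite /xdot (vdot_comm du.1) (vdot_comm du.2); ring.
Qed.

Lemma flow_gap_gronwall x y T rho M tau : Gamma x -> Gamma y -> 0 <= T -> 0 < rho ->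
  (forall s, 0 <= s <= T -> forall p, xnorm (xsub p (Phi s x)) < rho -> U p /\ JB p <= M) ->
  0 <= tau <= T -> (forall s, 0 < s < tau -> xnorm (xsub (Phi s y) (Phi s x)) < rho) ->
  xnorm (xsub (Phi tau y) (Phi tau x)) <= xnorm (xsub y x) * exp (M * tau).
Proof.
move=> Gx Gy T0 rho0 hM tauT close.
set D := fun t => xsq (xsub (Phi t y) (Phi t x)).
have dD : forall t, 0 < t <= tau ->
    derivable_pt_lim D t (2 * xdot (xsub (Phi t y) (Phi t x)) (xsub (Ff (Phi t y)) (Ff (Phi t x)))).
  move=> t t0; have [dy1 dy2] := proj1 (HPhi Gy) t ltac:(lra).
  have [dx1 dx2] := proj1 (HPhi Gx) t ltac:(lra).
  apply: deriv_xsq => i; exact: derivable_pt_lim_minus.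
have growth : forall t, 0 < t < tau ->
    2 * xdot (xsub (Phi t y) (Phi t x)) (xsub (Ff (Phi t y)) (Ff (Phi t x))) <= 2 * M * D t.
  move=> t t0; have lip := F_lipschitz_near_traj Gx T0 rho0 hM (s := t) ltac:(lra) (close t t0).
  have := xdot_le (xsub (Phi t y) (Phi t x)) (xsub (Ff (Phi t y)) (Ff (Phi t x))).
  by rewrite /D -xnorm_sq; have := xnorm_nonneg (xsub (Phi t y) (Phi t x)); nra.
have rcD : right_cont0 D.
  apply: (right_cont0_quad (@xsq_quad_lipschitz n m)).
  exact: curve_right_cont0_sub (proj2 (HPhi Gy)) (proj2 (HPhi Gx)).
have := gronwall (proj1 tauT) dD growth rcD; rewrite /D !HPhi0 // => G.
apply: xnorm_le_of_sq; first by have := xnorm_nonneg (xsub y x); have := exp_pos (M * tau); nra.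
have e2 : exp (2 * M * tau) = exp (M * tau) * exp (M * tau) by rewrite -exp_plus; congr exp; ring.
by rewrite e2 in G; apply: Rle_trans G _; rewrite -xnorm_sq; right; ring.
Qed.

Lemma flow_gap_persists x y tau r : Gamma x -> Gamma y -> 0 <= tau ->
  xnorm (xsub (Phi tau y) (Phi tau x)) < r -> exists eta, 0 < eta /\
    forall t, tau <= t < tau + eta -> xnorm (xsub (Phi t y) (Phi t x)) < r.
Proof.
move=> Gx Gy tau0 gap.
set s0 := r - xnorm (xsub (Phi tau y) (Phi tau x)); have s00 : 0 < s0 by rewrite /s0; lra.
have [e1 [e10 h1]] := solution_cont (HPhi Gy) tau0 (eps := s0 / 2) ltac:(lra).
have [e2 [e20 h2]] := solution_cont (HPhi Gx) tau0 (eps := s0 / 2) ltac:(lra).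
exists (Rmin e1 e2); split; first exact: Rmin_pos.
move=> t tt; have tclose : Rabs (t - tau) < Rmin e1 e2 by rewrite Rabs_right; lra.
have := xsub4 (Phi t y) (Phi t x) (Phi tau y) (Phi tau x).
have := h1 t ltac:(lra) ltac:(have := Rmin_l e1 e2; lra).
have := h2 t ltac:(lra) ltac:(have := Rmin_r e1 e2; lra).
have := xnorm_tri (xsub (Phi t y) (Phi t x)) (xsub (Phi tau y) (Phi tau x)) (@xzero n m).
by rewrite !xsub_zero /s0; lra.
Qed.

(* Continuous dependence of the flow on the initial point, uniformly on
   [0, T]: the trajectories stay in the tube by real induction. *)
Lemma flow_cont x T : Gamma x -> 0 <= T -> forall eps, 0 < eps -> exists delta, 0 < delta /\
  forall y, Gamma y -> xnorm (xsub y x) < delta ->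
    forall t, 0 <= t <= T -> xnorm (xsub (Phi t y) (Phi t x)) < eps.
Proof.
move=> Gx T0 eps eps0.
have [rho [M' [rho0 [M'0 hM']]]] := jacobian_tube_bound Gx T0.
set r := Rmin rho eps / 2; have r0 : 0 < r by have := Rmin_pos rho eps rho0 eps0; rewrite /r; lra.
have r_rho : r < rho by have := Rmin_l rho eps; rewrite /r; lra.
have r_eps : r < eps by have := Rmin_r rho eps; rewrite /r; lra.
set E := exp (- (M' * T)); have E0 : 0 < E := exp_pos _.
exists (r * E); split; first exact: Rmult_lt_0_compat.
move=> y Gy yx.
set Q := fun tau => forall t, 0 <= t <= tau -> t <= T -> xnorm (xsub (Phi t y) (Phi t x)) < r.
suff QT : Q T by move=> t tT; have := QT t tT (proj2 tT); lra.
apply: real_ind => //.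
- by move=> s t st Qt t' t's t'T; apply: Qt => //; lra.
- by move=> s s0 t ts; lra.
move=> tau tauT below.
have gap : xnorm (xsub (Phi tau y) (Phi tau x)) < r.
  have G := flow_gap_gronwall Gx Gy T0 rho0 hM' tauT
    (fun s s0 => Rlt_trans _ _ _ (below s (proj2 s0) s ltac:(lra) ltac:(lra)) r_rho).
  have decay : exp (M' * tau) * E <= 1.
    by rewrite /E -exp_plus -exp_0; apply: exp_mono; nra.
  apply: Rle_lt_trans G _; have := exp_pos (M' * tau) => ex0.
  by have := Rmult_lt_compat_r _ _ _ ex0 yx; nra.
have [eta [eta0 later]] := flow_gap_persists Gx Gy (proj1 tauT) gap.
exists (eta / 2); split; first lra.
move=> t t0 tT; have [earlier | after] := Rlt_le_dec t tau.
  by apply: (below t earlier t) => //; lra.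
by apply: later; lra.
Qed.

Variable Q : R -> X n m -> X n m -> X n m.
Hypothesis HQ0 : forall x v, Gamma x -> Q 0 x v = v.
Hypothesis HQ : forall x v, Gamma x ->
  solves_nonneg (fun t => Q t x v) (fun t y => DFapp Daf Dzf Dag Dzg (Phi t x) y).

Lemma Q_norm_bound x T M : Gamma x -> 0 <= T -> 0 <= M ->
  (forall s, 0 <= s <= T -> JB (Phi s x) <= M) ->
  forall v t, 0 <= t <= T -> xnorm (Q t x v) <= xnorm v * exp (M * T).
Proof.
move=> Gx T0 M0 hM v t tT.
set D := fun s => xsq (Q s x v).
have dD : forall s, 0 < s <= t -> derivable_pt_lim D s (2 * xdot (Q s x v) (DFp (Phi s x) (Q s x v))).
  by move=> s s0; have [d1 d2] := proj1 (HQ v Gx) s ltac:(lra); exact: deriv_xsq.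
have growth : forall s, 0 < s < t -> 2 * xdot (Q s x v) (DFp (Phi s x) (Q s x v)) <= 2 * M * D s.
  move=> s s0; rewrite /D -xnorm_sq.
  have := xdot_le (Q s x v) (DFp (Phi s x) (Q s x v)).
  have := DF_bound (Phi s x) (Q s x v); have := hM s ltac:(lra).
  have := xnorm_nonneg (Q s x v); have := xnorm_nonneg (DFp (Phi s x) (Q s x v)).
  by have := JB_nonneg (Phi s x); nra.
have rcD : right_cont0 D by exact: right_cont0_quad (@xsq_quad_lipschitz n m) (proj2 (HQ v Gx)).
have := gronwall (proj1 tT) dD growth rcD; rewrite /D HQ0 // => G.
apply: xnorm_le_of_sq; first by have := xnorm_nonneg v; have := exp_pos (M * T); nra.
have e2 : exp (2 * M * t) <= exp (M * T) * exp (M * T) by rewrite -exp_plus; apply: exp_mono; nra.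
apply: Rle_trans G _; rewrite -xnorm_sq.
by have := xnorm_nonneg v; have := exp_pos (2 * M * t); nra.
Qed.

(* Gronwall estimate for the gap between Q(., y) v and Q(., x) v: with
   e = Q(., y) v - Q(., x) v one has
     e' = DF(Phi(., y)) e + (DF(Phi(., y)) - DF(Phi(., x))) Q(., x) v,
   so |e|^2 + b/c grows at most at rate c = 2 M + b + 1, where b = eta P. *)
Lemma variational_gap x y v T M eta P : Gamma x -> Gamma y -> 0 <= T -> 0 <= M ->
  0 <= eta -> 0 <= P ->
  (forall s, 0 <= s <= T ->
     JB (Phi s y) <= M /\ JD (Phi s y) (Phi s x) <= eta /\ xnorm (Q s x v) <= P) ->
  xsq (xsub (Q T y v) (Q T x v)) <= eta * P * exp ((2 * M + eta * P + 1) * T).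
Proof.
move=> Gx Gy T0 M0 eta0 P0 bounds.
set b := eta * P; have b0 : 0 <= b by rewrite /b; nra.
set c := 2 * M + b + 1; have c1 : 1 <= c by rewrite /c; lra.
set e := fun s => xsub (Q s y v) (Q s x v).
set E := fun s => xsq (e s) + b / c.
set rate := fun s => 2 * xdot (e s) (xsub (DFp (Phi s y) (Q s y v)) (DFp (Phi s x) (Q s x v))).
have dE : forall s, 0 < s <= T -> derivable_pt_lim E s (rate s).
  move=> s s0; have [dy1 dy2] := proj1 (HQ v Gy) s ltac:(lra).
  have [dx1 dx2] := proj1 (HQ v Gx) s ltac:(lra).
  apply: derivable_pt_lim_eq (Rplus_0_r _).
  apply: derivable_pt_lim_plus; last exact: derivable_pt_lim_const.
  by apply: deriv_xsq => i; exact: derivable_pt_lim_minus.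
have growth : forall s, 0 < s < T -> rate s <= c * E s.
  move=> s s0; have [JBs [JDs Qs]] := bounds s ltac:(lra).
  have split_de : xsub (DFp (Phi s y) (Q s y v)) (DFp (Phi s x) (Q s x v))
      = xadd (DFp (Phi s y) (e s)) (xsub (DFp (Phi s y) (Q s x v)) (DFp (Phi s x) (Q s x v))).
    by rewrite /e DF_sub; apply: xext => i; rewrite /= /vsub /vadd; ring.
  have de_bound : xnorm (xsub (DFp (Phi s y) (Q s y v)) (DFp (Phi s x) (Q s x v)))
                  <= M * xnorm (e s) + b.
    rewrite split_de; apply: Rle_trans (xnorm_add _ _) _.
    have := DF_bound (Phi s y) (e s); have := DF_diff (Phi s y) (Phi s x) (Q s x v).
    have := xnorm_nonneg (e s); have := xnorm_nonneg (Q s x v).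
    by have := JB_nonneg (Phi s y); have := JD_nonneg (Phi s y) (Phi s x); rewrite /b; nra.
  have cbc : c * (b / c) = b by field; lra.
  rewrite /rate /E Rmult_plus_distr_l cbc; exact: perturbed_rate.
have rcE : right_cont0 E.
  apply: right_cont0_plus (right_cont0_const _).
  apply: (right_cont0_quad (@xsq_quad_lipschitz n m)).
  exact: curve_right_cont0_sub (proj2 (HQ v Gy)) (proj2 (HQ v Gx)).
have := gronwall T0 dE growth rcE; rewrite /E /e !HQ0 // xsub_self.
have -> : xsq (@xzero n m) = 0 by rewrite -xnorm_sq xnorm_zero; ring.
have bc : b / c <= b.
  by apply: (Rmult_le_reg_r c); [lra | rewrite /Rdiv Rmult_assoc Rinv_l; nra].
have := exp_pos (c * T); have : 0 <= b / c by apply: Rmult_le_pos; [lra | left; apply: Rinv_0_lt_compat; lra].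
move=> bc0 e0 G; have := Rmult_le_compat_r _ _ _ (Rlt_le _ _ e0) bc; lra.
Qed.

Lemma Q_cont x T B : Gamma x -> 0 <= T -> 0 <= B -> forall eps, 0 < eps ->
  exists delta, 0 < delta /\ forall y, Gamma y -> xnorm (xsub y x) < delta ->
    forall v, xnorm v <= B -> xnorm (xsub (Q T y v) (Q T x v)) < eps.
Proof.
move=> Gx T0 B0 eps eps0.
have [r0 [M [r00 [M0 hM]]]] := jacobian_tube_bound Gx T0.
set P := B * exp (M * T); have P0 : 0 <= P by rewrite /P; have := exp_pos (M * T); nra.
set K := exp ((2 * M + P + 1) * T); have K0 : 0 < K := exp_pos _.
have [eta [eta0 [eta1 eta_small]]] := small_factor (K := P * K) (e := eps * eps) ltac:(nra) ltac:(nra).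
rewrite -Rmult_assoc in eta_small.
have [r1 [r10 [M1 hM1]]] := jacobian_tube Gx T0 eta0.
have [d [d0 hd]] := flow_cont Gx T0 (Rmin_pos r0 r1 r00 r10).
exists d; split => // y Gy yx v vB.
have bounds : forall s, 0 <= s <= T ->
    JB (Phi s y) <= M /\ JD (Phi s y) (Phi s x) <= eta /\ xnorm (Q s x v) <= P.
  move=> s sT; have close := hd y Gy yx s sT.
  have [_ JBy] := hM s sT (Phi s y) ltac:(have := Rmin_l r0 r1; lra).
  have [_ [JDy _]] := hM1 s sT (Phi s y) ltac:(have := Rmin_r r0 r1; lra).
  do 2!split => //; first lra.
  have := Q_norm_bound Gx T0 M0 (fun s sT => proj2 (hM s sT (Phi s x)
            ltac:(rewrite xsub_self xnorm_zero; lra))) v sT.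
  by have := exp_pos (M * T); rewrite /P; nra.
have := variational_gap Gx Gy T0 M0 (Rlt_le _ _ eta0) P0 bounds.
have : exp ((2 * M + eta * P + 1) * T) <= K.
  by apply: exp_mono; apply: Rmult_le_compat_r => //; nra.
move=> eK gap; suff : xsq (xsub (Q T y v) (Q T x v)) < eps * eps.
  by rewrite -xnorm_sq; have := xnorm_nonneg (xsub (Q T y v) (Q T x v)); nra.
by apply: Rle_lt_trans gap _; have := Rmult_le_compat_l (eta * P) _ _ ltac:(nra) eK; lra.
Qed.

Variables (alpha ell : X n m -> R) (c1 : R).
Hypothesis Halphac : cont_on U alpha.
Hypothesis Hellc : cont_on U ell.
Hypothesis Hc1 : 0 < c1.
Hypothesis Hdaf : forall x, U x -> forall a' : vec n,
  vdot a' (mapp (Daf x) a') >= alpha x * vnorm a' ^ 2.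
Hypothesis Hdzg : forall x, U x -> forall z' : vec m,
  vdot z' (mapp (Dzg x) z') <= ell x * vnorm z' ^ 2.
Hypothesis Hgap : forall x, U x -> alpha x >= ell x + opnorm (Dzf x) + opnorm (Dag x) + c1.

(* The cone inequality (Hypothesis 2): along DF(p), the derivative of the
   cone function L(u) = |a|^2 - |z|^2 dominates (alpha + ell) L(u) + c1 |u|^2.
   The cross terms are absorbed using 2 |a| |z| <= |a|^2 + |z|^2. *)
Lemma cone_rate p u : U p ->
  2 * (vdot u.1 (DFp p u).1 - vdot u.2 (DFp p u).2)
    >= (alpha p + ell p) * Lcone u (@xzero n m) + c1 * xsq u.
Proof.
move=> Up; rewrite Lcone_zero /DFp /DFapp /= !vdot_addr /xsq.
have da := Hdaf Up u.1; have dz := Hdzg Up u.2; rewrite !vnorm_pow2 in da dz.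
set a := vnorm u.1; set z := vnorm u.2.
set kf := opnorm (Dzf p); set kg := opnorm (Dag p).
have cross_f : Rabs (vdot u.1 (mapp (Dzf p) u.2)) <= a * (kf * z).
  apply: Rle_trans (cauchy_schwarz _ _) _.
  by apply: Rmult_le_compat_l; [exact: vnorm_nonneg | exact: opnorm_bound].
have cross_g : Rabs (vdot u.2 (mapp (Dag p) u.1)) <= z * (kg * a).
  apply: Rle_trans (cauchy_schwarz _ _) _.
  by apply: Rmult_le_compat_l; [exact: vnorm_nonneg | exact: opnorm_bound].
have := Rle_abs (- vdot u.1 (mapp (Dzf p) u.2)); rewrite Rabs_Ropp.
have := Rle_abs (vdot u.2 (mapp (Dag p) u.1)).
have gap := Hgap Up; have kf0 : 0 <= kf := opnorm_nonneg _; have kg0 : 0 <= kg := opnorm_nonneg _.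
have a0 : 0 <= a := vnorm_nonneg _; have z0 : 0 <= z := vnorm_nonneg _.
have sa : a * a = vdot u.1 u.1 := vnorm_sq _; have sz : z * z = vdot u.2 u.2 := vnorm_sq _.
have amgm : 2 * (a * z) <= a * a + z * z by have := Rle_0_sqr (a - z); rewrite /Rsqr; nra.
have absorb : 2 * (kf + kg) * (a * z) <= (alpha p - ell p - c1) * (a * a + z * z).
  have := Rmult_le_compat_l (kf + kg) _ _ ltac:(lra) amgm.
  have : (kf + kg) * (a * a + z * z) <= (alpha p - ell p - c1) * (a * a + z * z).
    by apply: Rmult_le_compat_r; [nra | rewrite /kf /kg; lra].
  by lra.
by rewrite -sa -sz in da dz *; nra.
Qed.

Lemma Rmax0_lip a b : Rabs (Rmax 0 a - Rmax 0 b) <= Rabs (a - b).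
Proof.
rewrite /Rmax; case: (Rle_dec 0 a); case: (Rle_dec 0 b) => hb ha.
- lra.
- by rewrite Rabs_right; [rewrite Rabs_right; lra | lra].
- by rewrite Rabs_left1; [rewrite Rabs_left1; lra | lra].
- by rewrite Rminus_diag Rabs_R0; exact: Rabs_pos.
Qed.

(* the rate alpha + ell along the trajectory of x, extended constantly to
   negative times *)
Definition beta x s := alpha (Phi (Rmax 0 s) x) + ell (Phi (Rmax 0 s) x).

Lemma beta_cont x : Gamma x -> forall s, continuity_pt (beta x) s.
Proof.
move=> Gx s; apply: cont_of_eps => eps eps0.
set s0 := Rmax 0 s; have s00 : 0 <= s0 := Rmax_l _ _.
have U0 : U (Phi s0 x) by exact: traj_U.
have [da [da0 ha]] := Halphac U0 (eps := eps / 2) ltac:(lra).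
have [dl [dl0 hl]] := Hellc U0 (eps := eps / 2) ltac:(lra).
have [d [d0 hd]] := solution_cont (HPhi Gx) s00 (Rmin_pos da dl da0 dl0).
exists d; split => // s' s's.
have s'0 : 0 <= Rmax 0 s' := Rmax_l _ _.
have close := hd (Rmax 0 s') s'0 ltac:(have := Rmax0_lip s' s; rewrite -/s0; lra).
have U' : U (Phi (Rmax 0 s') x) by exact: traj_U.
have := ha _ U' ltac:(have := Rmin_l da dl; lra); have := hl _ U' ltac:(have := Rmin_r da dl; lra).
rewrite /beta -/s0 => q1 q2.
have := Rabs_triang (alpha (Phi (Rmax 0 s') x) - alpha (Phi s0 x)) (ell (Phi (Rmax 0 s') x) - ell (Phi s0 x)).
by rewrite (_ : _ + (_ - _) = alpha (Phi (Rmax 0 s') x) + ell (Phi (Rmax 0 s') x) - (alpha (Phi s0 x) + ell (Phi s0 x))); [lra | ring].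
Qed.

Lemma deriv_Lcone (u : R -> X n m) (du : X n m) t :
  (forall i, derivable_pt_lim (fun s => (u s).1 i) t (du.1 i)) ->
  (forall j, derivable_pt_lim (fun s => (u s).2 j) t (du.2 j)) ->
  derivable_pt_lim (fun s => Lcone (u s) (@xzero n m)) t
    (2 * (vdot (u t).1 du.1 - vdot (u t).2 du.2)).
Proof.
move=> d1 d2.
have -> : (fun s => Lcone (u s) (@xzero n m)) = fun s => vdot (u s).1 (u s).1 - vdot (u s).2 (u s).2.
  by apply: functional_extensionality => s; exact: Lcone_zero.
apply: derivable_pt_lim_eq; first by apply: derivable_pt_lim_minus; apply: deriv_vdot.
by rewrite (vdot_comm du.1) (vdot_comm du.2); ring.
Qed.

Definition varsol x (u : R -> X n m) := forall t, 0 < t ->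
  (forall i, derivable_pt_lim (fun s => (u s).1 i) t ((DFp (Phi t x) (u t)).1 i)) /\
  (forall j, derivable_pt_lim (fun s => (u s).2 j) t ((DFp (Phi t x) (u t)).2 j)).

Lemma varsol_Q x v : Gamma x -> varsol x (fun t => Q t x v).
Proof. by move=> Gx t t0; exact: (proj1 (HQ v Gx) t t0). Qed.

Lemma varsol_sub x u w : varsol x u -> varsol x w -> varsol x (fun t => xsub (u t) (w t)).
Proof.
move=> su sw t t0; have [du1 du2] := su t t0; have [dw1 dw2] := sw t t0.
by rewrite DF_sub; split => i; exact: derivable_pt_lim_minus.
Qed.

Variable H : X n m -> vec m -> vec n.
Hypothesis HT : forall x, Gamma x -> forall v : X n m,
  (forall t, 0 <= t -> Lcone (Q t x v) (@xzero n m) <= 0) <-> (forall i, v.1 i = H x v.2 i).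

Section WeightedCone.
Variables (x : X n m) (W : R -> R) (T : R).
Hypothesis Gx : Gamma x.
Hypothesis T0 : 0 <= T.
Hypothesis Wpos : forall t, 0 < W t.
Hypothesis W0 : W 0 = 1.
Hypothesis dW : forall t, 0 <= t <= T -> derivable_pt_lim W t (- beta x t * W t).

Definition wcone (u : R -> X n m) t := Lcone (u t) (@xzero n m) * W t.

Definition wcone_rate (u : R -> X n m) t :=
  (2 * (vdot (u t).1 (DFp (Phi t x) (u t)).1 - vdot (u t).2 (DFp (Phi t x) (u t)).2)
   - beta x t * Lcone (u t) (@xzero n m)) * W t.

(* By the cone inequality, the derivative of W L(u) is at least
   c1 W |u|^2. *)
Lemma wcone_deriv u : varsol x u -> forall t, 0 < t <= T ->
  derivable_pt_lim (wcone u) t (wcone_rate u t) /\ wcone_rate u t >= c1 * W t * xsq (u t).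
Proof.
move=> su t t0; have [d1 d2] := su t (proj1 t0); split.
  apply: derivable_pt_lim_eq; first by apply: derivable_pt_lim_mult; [exact: deriv_Lcone | apply: dW; lra].
  by rewrite /wcone_rate; ring.
have := cone_rate (u t) (traj_U Gx (Rlt_le _ _ (proj1 t0))).
rewrite /wcone_rate /beta Rmax_right; last lra.
move=> rate; have Wt := Wpos t.
by have := Rmult_ge_compat_r (W t) _ _ ltac:(lra) rate; lra.
Qed.

Lemma wcone_right_cont0 u : curve_right_cont0 u -> right_cont0 (wcone u).
Proof.
move=> uc; apply: right_cont0_mult.
  exact: right_cont0_quad (@Lcone_quad_lipschitz n m) uc.
exact: right_cont0_of_derivable (dW (t := 0) ltac:(lra)).
Qed.

Lemma wcone_nondecr u : varsol x u -> curve_right_cont0 u ->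
  forall t, 0 <= t <= T -> wcone u 0 <= wcone u t.
Proof.
move=> su uc t tT; apply: (nondecr (h' := wcone_rate u) (proj1 tT)).
- by move=> s s0; apply: (proj1 (wcone_deriv su (t := s) _)); lra.
- move=> s s0; have [_ rate] := wcone_deriv su (t := s) ltac:(lra).
  have := Rmult_le_pos _ _ (Rmult_le_pos _ _ (Rlt_le _ _ Hc1) (Rlt_le _ _ (Wpos s))) (xsq_nonneg (u s)).
  by lra.
- exact: wcone_right_cont0.
Qed.

Lemma wcone_pair_growth u1 u2 k : varsol x u1 -> varsol x u2 ->
  curve_right_cont0 u1 -> curve_right_cont0 u2 ->
  (forall s, 0 < s < T -> k <= c1 * W s * (xsq (u1 s) + xsq (u2 s))) ->
  wcone u1 0 + wcone u2 0 + k * T <= wcone u1 T + wcone u2 T.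
Proof.
move=> s1 s2 c1_ c2_ rate.
set h := fun t => wcone u1 t + wcone u2 t + - k * t.
have dh : forall t, 0 < t <= T -> derivable_pt_lim h t (wcone_rate u1 t + wcone_rate u2 t + - k).
  move=> t t0; apply: derivable_pt_lim_plus.
    by apply: derivable_pt_lim_plus; [exact: (proj1 (wcone_deriv s1 t0)) | exact: (proj1 (wcone_deriv s2 t0))].
  by apply: derivable_pt_lim_eq; [exact: derivable_pt_lim_scal (derivable_pt_lim_id t) | ring].
have h'0 : forall t, 0 < t < T -> 0 <= wcone_rate u1 t + wcone_rate u2 t + - k.
  move=> t t0; have [_ r1] := wcone_deriv s1 (t := t) ltac:(lra).
  by have [_ r2] := wcone_deriv s2 (t := t) ltac:(lra); have := rate t t0; lra.
have rch : right_cont0 h.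
  apply: right_cont0_plus; first by apply: right_cont0_plus; exact: wcone_right_cont0.
  by apply: right_cont0_scal; apply: right_cont0_of_derivable (derivable_pt_lim_id 0).
by have := nondecr T0 dh h'0 rch; rewrite /h; lra.
Qed.

(* Let v' = (a', z) lie in the cone at time 0 and be
   at distance >= ep from the invariant vector (H(x) z, z).  The difference of
   their images keeps W L >= ep^2, which makes the weighted cone function of
   Q(., x) v' grow linearly; for T large it exceeds 1. *)
Lemma escape zz (a' : vec n) ep : 0 < ep ->
  1 + 2 * vdot zz zz <= c1 * (ep * ep) / 2 * T ->
  vdot a' a' <= vdot zz zz -> ep <= vnorm (vsub a' (H x zz)) ->
  1 <= wcone (fun t => Q t x (a', zz)) T.
Proof.
move=> ep0 T_large a'_cone a'_far.
set p := fun t => Q t x (a', zz); set q := fun t => Q t x (H x zz, zz).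
set w := fun t => xsub (p t) (q t).
have sp : varsol x p := varsol_Q _ Gx; have sq : varsol x q := varsol_Q _ Gx.
have cp : curve_right_cont0 p := proj2 (HQ _ Gx); have cq : curve_right_cont0 q := proj2 (HQ _ Gx).
have q_cone : forall t, 0 <= t -> Lcone (q t) (@xzero n m) <= 0 by apply/(HT Gx).
have q0_cone : vdot (H x zz) (H x zz) <= vdot zz zz.
  by have := q_cone 0 (Rle_refl 0); rewrite /q HQ0 // Lcone_zero /=; lra.
have w_sep : forall t, 0 <= t <= T -> ep * ep <= wcone w t.
  move=> t tT; have := wcone_nondecr (varsol_sub sp sq) (curve_right_cont0_sub cp cq) tT.
  rewrite /wcone W0 Rmult_1_r /w /p /q !HQ0 // Lcone_zero /=.
  have -> : vdot (vsub zz zz) (vsub zz zz) = 0 by rewrite vdot_subl !vdot_subr; ring.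
  by rewrite -vnorm_sq; have := vnorm_nonneg (vsub a' (H x zz)); nra.
have rate : forall s, 0 < s < T -> c1 * (ep * ep) / 2 <= c1 * W s * (xsq (p s) + xsq (q s)).
  move=> s s0; have sep : ep * ep <= Lcone (w s) (@xzero n m) * W s := w_sep s ltac:(lra).
  have Ws := Wpos s.
  have Lw := Rmult_le_compat_r _ _ _ (Rlt_le _ _ Ws) (Lcone_le_xsq (w s)).
  have wpq : xsq (w s) <= 2 * xsq (p s) + 2 * xsq (q s) := xsq_sub_le _ _.
  have Wpq := Rmult_le_compat_r _ _ _ (Rlt_le _ _ Ws) wpq.
  have half : ep * ep / 2 <= W s * (xsq (p s) + xsq (q s)) by lra.
  by have := Rmult_le_compat_l _ _ _ (Rlt_le _ _ Hc1) half; lra.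
have := wcone_pair_growth sp sq cp cq rate.
have := Rmult_le_compat_r _ _ _ (Rlt_le _ _ (Wpos T)) (q_cone T T0).
rewrite /wcone W0 !Rmult_1_r /p /q !HQ0 // !Lcone_zero /= Rmult_0_l.
by have := vdot_self_nonneg a'; have := vdot_self_nonneg (H x zz); lra.
Qed.
End WeightedCone.

(* Continuity of x |-> H(x) z at every point x of Gamma: if H(y) z were far
   from H(x) z, Q(T, x) v_y would have escaped the cone by the time T of
   [escape], whereas Q(T, y) v_y stays in it and is close to Q(T, x) v_y. *)
Lemma invariant_cone_cont zz x : Gamma x -> forall eps, 0 < eps -> exists delta, 0 < delta /\
  forall y, Gamma y -> xnorm (xsub y x) < delta -> vnorm (vsub (H y zz) (H x zz)) < eps.
Proof.
move=> Gx eps eps0; set ep := eps / 2; have ep0 : 0 < ep by rewrite /ep; lra.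
have cee : 0 < c1 * (ep * ep) / 2.
  by have := Rmult_lt_0_compat _ _ Hc1 (Rmult_lt_0_compat _ _ ep0 ep0); lra.
(* the escape time T, the escape threshold 1 / W(T), and a bound P for the
   images under Q(T, x) of the candidate vectors (H(y) z, z) *)
have [T [T0 T_large]] := linear_beats (1 + 2 * vdot zz zz) cee.
have [W [Wpos [W0 dW]]] := integrating_factor T0 (beta_cont Gx).
have [M [M0 hM]] := jacobian_bound Gx T0.
set mg := / W T; have mg0 : 0 < mg by exact: Rinv_0_lt_compat.
set B := 2 * vnorm zz + 1; have B0 : 0 <= B by rewrite /B; have := vnorm_nonneg zz; lra.
set P := B * exp (M * T); have P0 : 0 <= P by rewrite /P; have := exp_pos (M * T); nra.
have [acc [acc0 [acc1 acc_mg]]] := small_factor (K := 2 * (2 * P + 1)) ltac:(lra) mg0.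
have [d [d0 hd]] := Q_cont Gx T0 B0 acc0.
exists d; split => // y Gy yx.
set v' : X n m := (H y zz, zz).
have y_cone : forall t, 0 <= t -> Lcone (Q t y v') (@xzero n m) <= 0 by apply/(HT Gy).
have v'_cone : vdot (H y zz) (H y zz) <= vdot zz zz.
  by have := y_cone 0 (Rle_refl 0); rewrite HQ0 // Lcone_zero /=; lra.
have v'B : xnorm v' <= B.
  apply: Rle_trans (xnorm_le _) _; rewrite /B /=.
  have : vnorm (H y zz) <= vnorm zz.
    by apply: vnorm_le_of_sq; [exact: vnorm_nonneg | rewrite vnorm_sq].
  by lra.
have Px : xnorm (Q T x v') <= P.
  have := Q_norm_bound Gx T0 M0 hM v' (conj T0 (Rle_refl T)).
  by have := exp_pos (M * T); rewrite /P; nra.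
apply: Rnot_le_lt => far.
(* Q(T, x) v' has left the cone by the margin mg ... *)
have esc : 1 <= Lcone (Q T x v') (@xzero n m) * W T.
  by apply: (escape Gx T0 Wpos W0 dW ep0 T_large v'_cone); rewrite /ep; lra.
have out : mg <= Lcone (Q T x v') (@xzero n m).
  apply: (Rmult_le_reg_r (W T)) => //.
  by rewrite /mg Rinv_l; [lra | have := Wpos T; lra].
(* ... so Q(T, y) v', which is acc-close to it, is not in the cone *)
have := Lcone_margin Px (hd y Gy yx v' v'B) acc1 acc_mg out.
by have := y_cone T T0; lra.
Qed.
End Dynamics.

Unset Implicit Arguments.

Theorem lemma2p10 (n m : nat)
  (f : X n m -> vec n) (g : X n m -> vec m)
  (U Gamma : X n m -> Prop)
  (* Hypothesis 1 *)
  (HUopen : is_open U) (HUconv : is_convex U)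
  (d : R) (Hd : 0 < d)
  (Hcone : forall x x', U x -> U x' -> Lcone x' x >= 0 -> ball_d d x x')
  (* Hypothesis 2: f, g are C^1 on U with partial Jacobians Daf, Dzf, Dag, Dzg *)
  (Daf : X n m -> mat n n) (Dzf : X n m -> mat n m)
  (Dag : X n m -> mat m n) (Dzg : X n m -> mat m m)
  (Hfdiff : forall x, U x ->
     frechet_at f (fun v => vadd (mapp (Daf x) v.1) (mapp (Dzf x) v.2)) x)
  (Hgdiff : forall x, U x ->
     frechet_at g (fun v => vadd (mapp (Dag x) v.1) (mapp (Dzg x) v.2)) x)
  (HDafc : forall i j, cont_on U (fun x => Daf x i j))
  (HDzfc : forall i j, cont_on U (fun x => Dzf x i j))
  (HDagc : forall i j, cont_on U (fun x => Dag x i j))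
  (HDzgc : forall i j, cont_on U (fun x => Dzg x i j))
  (alpha ell : X n m -> R) (c1 : R)
  (Halphac : cont_on U alpha) (Hellc : cont_on U ell)
  (Halpha : forall x, U x -> 0 < alpha x)
  (Hell : forall x, U x -> 0 <= ell x)
  (Hc1 : 0 < c1)
  (Hdaf : forall x, U x -> forall a' : vec n,
     vdot a' (mapp (Daf x) a') >= alpha x * vnorm a' ^ 2)
  (Hdzg : forall x, U x -> forall z' : vec m,
     vdot z' (mapp (Dzg x) z') <= ell x * vnorm z' ^ 2)
  (Hgap : forall x, U x ->
     alpha x >= ell x + opnorm (Dzf x) + opnorm (Dag x) + c1)
  (* the flow Phi of  a' = f(a,z), z' = g(a,z), for initial data in Gamma *)
  (Phi : R -> X n m -> X n m)
  (HPhi0 : forall x, Gamma x -> Phi 0 x = x)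
  (HPhi : forall x, Gamma x ->
     solves_nonneg (fun t => Phi t x) (fun _ p => (f p, g p)))
  (* Hypothesis 3 *)
  (HGU : forall x, Gamma x -> U x)
  (HGinv : forall x t, Gamma x -> 0 <= t -> Gamma (Phi t x))
  (HGproj : forall z : vec m,
     (exists x, Gamma x /\ x.2 = z) <-> (exists x, U x /\ x.2 = z))
  (* Q t x v = Q(t,x) v, the fundamental matrix solution of the variational
     equation  y' = DF(Phi(t,x)) y,  applied to v *)
  (Q : R -> X n m -> X n m -> X n m)
  (HQ0 : forall x v, Gamma x -> Q 0 x v = v)
  (HQ : forall x v, Gamma x ->
     solves_nonneg (fun t => Q t x v)
       (fun t y => DFapp Daf Dzf Dag Dzg (Phi t x) y))
  (* H(x) is the linear map whose graph is T(x) *)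
  (H : X n m -> vec m -> vec n)
  (HT : forall x, Gamma x -> forall v : X n m,
     (forall t, 0 <= t -> Lcone (Q t x v) (@xzero n m) <= 0) <->
     (forall i, v.1 i = H x v.2 i)) :
  forall zz : vec m, cont_on_vec Gamma (fun x => H x zz).
Proof.
move=> zz x Gx.
exact: (invariant_cone_cont HUopen Hfdiff Hgdiff HDafc HDzfc HDagc HDzgc HPhi0 HPhi HGU HGinv
          HQ0 HQ Halphac Hellc Hc1 Hdaf Hdzg Hgap HT zz Gx).
Qed.
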